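(* Let $G$ be a group with $\mathfrak{F}\mathrm{cd}\, G = n < \infty$. Then there is an $\mathfrak{F}$-split exact sequence of $\mathbb{Z}G$-modules $0 \to P_n \to P_{n-1} \to \cdots \to P_0 \to \mathbb{Z} \to 0$ in which each $P_i$ is a permutation module $\mathbb{Z}[\Omega_i]$ on a $G$-set $\Omega_i$ all of whose point stabilisers are finite.
   Context: $\mathfrak{F}$ denotes the class of finite groups. For a group $G$, let $\Delta = \bigsqcup_{K \le G,\ K \text{ finite}} G/K$. A short exact sequence of $\mathbb{Z}G$-modules is $\mathfrak{F}$-split if it splits upon restriction to every finite subgroup of $G$ (equivalently, after tensoring with $\mathbb{Z}\Delta$ over $\mathbb{Z}$); a long exact sequence is $\mathfrak{F}$-split if all its associated short exact sequences are. A $\mathbb{Z}G$-module is $\mathfrak{F}$-projective if it is a direct summand of $N \otimes_{\mathbb{Z}} \mathbb{Z}\Delta$ for some $\mathbb{Z}G$-module $N$. The $\mathfrak{F}$-projective dimension $\mathfrak{F}\mathrm{pd}\, M$ of a $\mathbb{Z}G$-module $M$ is the minimal $n$ such that there is an $\mathfrak{F}$-split exact sequence $0\to P_n\to\cdots\to P_0\to M\to 0$ with all $P_i$ $\mathfrak{F}$-projective ($\infty$ if none exists). The $\mathfrak{F}$-cohomological dimension is $\mathfrak{F}\mathrm{cd}\, G = \mathfrak{F}\mathrm{pd}\,\mathbb{Z}$ (trivial module). *)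

From Stdlib Require Import List ZArith Lia Classical FunctionalExtensionality
  PropExtensionality ProofIrrelevance.
Import ListNotations.

Record Grp := {
  gcar :> Type;
  gmul : gcar -> gcar -> gcar;
  gone : gcar;
  ginv : gcar -> gcar;
  gmulA : forall x y z, gmul x (gmul y z) = gmul (gmul x y) z;
  gmul1l : forall x, gmul gone x = x;
  gmul1r : forall x, gmul x gone = x;
  gmulVl : forall x, gmul (ginv x) x = gone;
  gmulVr : forall x, gmul x (ginv x) = gone }.
Arguments gmul {G} : rename.
Arguments gone {G} : rename.
Arguments ginv {G} : rename.

Lemma ginv1 (G : Grp) : ginv (@gone G) = gone.
Proof. rewrite <- (gmul1l G (ginv gone)). apply gmulVr. Qed.

Lemma gKl (G : Grp) (g y : G) : gmul (ginv g) (gmul g y) = y.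
Proof. rewrite gmulA, gmulVl, gmul1l. reflexivity. Qed.

Lemma gKr (G : Grp) (g y : G) : gmul g (gmul (ginv g) y) = y.
Proof. rewrite gmulA, gmulVr, gmul1l. reflexivity. Qed.

Lemma ginvM (G : Grp) (g h : G) : ginv (gmul g h) = gmul (ginv h) (ginv g).
Proof.
  rewrite <- (gmul1r G (ginv (gmul g h))).
  assert (E : gmul (gmul g h) (gmul (ginv h) (ginv g)) = gone).
  { rewrite <- gmulA, gKr. apply gmulVr. }
  rewrite <- E, gmulA, gmulVl, gmul1l. reflexivity.
Qed.

Definition fin_subgroup (G : Grp) (K : G -> Prop) : Prop :=
  K gone /\ (forall x y, K x -> K y -> K (gmul x y)) /\
  (forall x, K x -> K (ginv x)) /\
  exists l : list G, forall x, K x -> In x l.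

Record ZGmod (G : Grp) := {
  mcar :> Type;
  madd : mcar -> mcar -> mcar;
  mzero : mcar;
  mopp : mcar -> mcar;
  maddA : forall x y z, madd x (madd y z) = madd (madd x y) z;
  maddC : forall x y, madd x y = madd y x;
  madd0 : forall x, madd x mzero = x;
  maddN : forall x, madd x (mopp x) = mzero;
  mact : gcar G -> mcar -> mcar;
  mactD : forall g x y, mact g (madd x y) = madd (mact g x) (mact g y);
  mact1 : forall x, mact gone x = x;
  mactM : forall g h x, mact (gmul g h) x = mact g (mact h x) }.
Arguments mcar {G} M : rename.
Arguments madd {G M} : rename.
Arguments mzero {G M} : rename.
Arguments mopp {G M} : rename.
Arguments mact {G M} : rename.

Lemma mopp0 (G : Grp) (M : ZGmod G) : mopp (@mzero G M) = mzero.
Proof. rewrite <- (madd0 G M (mopp mzero)), maddC. apply maddN. Qed.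

Lemma mact0 (G : Grp) (M : ZGmod G) (g : G) : mact g (@mzero G M) = mzero.
Proof.
  assert (E : mact g (@mzero G M) = madd (mact g mzero) (mact g mzero)).
  { rewrite <- mactD, madd0. reflexivity. }
  set (a := mact g (@mzero G M)) in *.
  transitivity (madd a (madd a (mopp a))).
  - rewrite maddN, madd0. reflexivity.
  - rewrite maddA, <- E. apply maddN.
Qed.

Definition trivZ (G : Grp) : ZGmod G.
Proof.
  refine {| mcar := Z; madd := Z.add; mzero := 0%Z; mopp := Z.opp;
            mact := fun _ x => x |}; intros; (reflexivity || lia).
Defined.

Record GSet (G : Grp) := {
  scar :> Type;
  sact : gcar G -> scar -> scar;
  sact1 : forall w, sact gone w = w;
  sactM : forall g h w, sact (gmul g h) w = sact g (sact h w) }.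
Arguments scar {G} O : rename.
Arguments sact {G O} : rename.

Definition finite_stabilisers (G : Grp) (O : GSet G) : Prop :=
  forall w : O, exists l : list G, forall g, sact g w = w -> In g l.

Lemma sig_eq' (A : Type) (P : A -> Prop) (a b : {x : A | P x}) :
  proj1_sig a = proj1_sig b -> a = b.
Proof.
  destruct a as [a pa], b as [b pb]; simpl; intros E; subst.
  f_equal; apply proof_irrelevance.
Qed.

(* Delta = disjoint union over finite subgroups K of the coset spaces G/K.
   A point is a pair (K, S) with K a finite subgroup and S a left coset gK
   (as a subset of G); G acts by left translation on S. *)
Definition is_lcoset (G : Grp) (K S : G -> Prop) : Prop :=
  exists g, forall x, S x <-> exists k, K k /\ x = gmul g k.

Definition Delta_car (G : Grp) : Type :=
  {p : (G -> Prop) * (G -> Prop) | fin_subgroup G (fst p) /\ is_lcoset G (fst p) (snd p)}.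

Lemma Delta_act_pf (G : Grp) (g : G) (p : Delta_car G) :
  let q := (fst (proj1_sig p), fun x => snd (proj1_sig p) (gmul (ginv g) x)) in
  fin_subgroup G (fst q) /\ is_lcoset G (fst q) (snd q).
Proof.
  destruct p as [[K S] [HK [g0 Hc]]]; simpl. split; [exact HK|].
  exists (gmul g g0). intros x. rewrite Hc. split.
  - intros [k [Kk E]]. exists k. split; [exact Kk|].
    rewrite <- gmulA, <- E, gKr. reflexivity.
  - intros [k [Kk E]]. exists k. split; [exact Kk|].
    rewrite E, <- gmulA, gKl. reflexivity.
Qed.

Definition Delta_act (G : Grp) (g : G) (p : Delta_car G) : Delta_car G :=
  exist _ _ (Delta_act_pf G g p).

Definition Delta (G : Grp) : GSet G.
Proof.
  refine {| scar := Delta_car G; sact := Delta_act G |}.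
  - intros [[K S] pf]. apply sig_eq'; simpl. f_equal.
    apply functional_extensionality; intros x. rewrite ginv1, gmul1l. reflexivity.
  - intros g h [[K S] pf]. apply sig_eq'; simpl. f_equal.
    apply functional_extensionality; intros x. rewrite ginvM, gmulA. reflexivity.
Defined.

(* ---------- N (x)_Z Z[Omega] with the diagonal action ----------
   Since Z[Omega] is free abelian on Omega, N (x)_Z Z[Omega] is (canonically)
   the module of finitely supported functions Omega -> N, with
   (g.f)(w) = g.(f(g^-1 w)).  For N = Z (trivial) this is the permutation
   module Z[Omega]. *)
Definition finsupp (G : Grp) (M : ZGmod G) (O : GSet G) (f : O -> M) : Prop :=
  exists l : list O, forall w, f w <> mzero -> In w l.

Definition FS (G : Grp) (M : ZGmod G) (O : GSet G) : Type :=
  {f : O -> M | finsupp G M O f}.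

Lemma fs_add_pf (G : Grp) (M : ZGmod G) (O : GSet G) (f g : FS G M O) :
  finsupp G M O (fun w => madd (proj1_sig f w) (proj1_sig g w)).
Proof.
  destruct f as [f [l1 H1]], g as [g [l2 H2]]; simpl.
  exists (l1 ++ l2). intros w Hw. apply in_or_app.
  destruct (classic (f w = mzero)) as [E|E].
  - right. apply H2. intros E'. apply Hw. rewrite E, E'. apply madd0.
  - left. apply H1. exact E.
Qed.

Lemma fs_zero_pf (G : Grp) (M : ZGmod G) (O : GSet G) : finsupp G M O (fun _ => mzero).
Proof. exists nil. intros w H. exfalso. apply H. reflexivity. Qed.

Lemma fs_opp_pf (G : Grp) (M : ZGmod G) (O : GSet G) (f : FS G M O) :
  finsupp G M O (fun w => mopp (proj1_sig f w)).
Proof.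
  destruct f as [f [l H]]; simpl. exists l. intros w Hw. apply H.
  intros E. apply Hw. rewrite E. apply mopp0.
Qed.

Lemma fs_act_pf (G : Grp) (M : ZGmod G) (O : GSet G) (g : gcar G) (f : FS G M O) :
  finsupp G M O (fun w => mact g (proj1_sig f (sact (ginv g) w))).
Proof.
  destruct f as [f [l H]]; simpl. exists (map (sact g) l). intros w Hw.
  replace w with (sact g (sact (ginv g) w)).
  - apply in_map. apply H. intros E. apply Hw. rewrite E. apply mact0.
  - rewrite <- sactM, gmulVr. apply sact1.
Qed.

Definition tens (G : Grp) (M : ZGmod G) (O : GSet G) : ZGmod G.
Proof.
  refine {| mcar := FS G M O;
            madd := fun f g => exist _ _ (fs_add_pf G M O f g);
            mzero := exist _ _ (fs_zero_pf G M O);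
            mopp := fun f => exist _ _ (fs_opp_pf G M O f);
            mact := fun g f => exist _ _ (fs_act_pf G M O g f) |};
  intros; apply sig_eq'; simpl; apply functional_extensionality; intros w.
  - apply maddA.
  - apply maddC.
  - apply madd0.
  - apply maddN.
  - apply mactD.
  - rewrite ginv1, sact1. apply mact1.
  - rewrite ginvM, sactM. apply mactM.
Defined.

Definition perm_mod (G : Grp) (O : GSet G) : ZGmod G := tens G (trivZ G) O.

Definition is_hom (G : Grp) (M N : ZGmod G) (f : M -> N) : Prop :=
  (forall x y, f (madd x y) = madd (f x) (f y)) /\
  (forall g x, f (mact g x) = mact g (f x)).

(* kernel of the i-th map of the augmented complex  ... -> P_1 -> P_0 -> M *)
Definition in_ker (G : Grp) (M : ZGmod G) (P : nat -> ZGmod G)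
  (d : forall i, P (S i) -> P i) (eps : P 0 -> M) (i : nat) : P i -> Prop :=
  match i as i0 return P i0 -> Prop with
  | 0 => fun x => eps x = mzero
  | S j => fun x => d j x = mzero
  end.

Definition exact_resolution (G : Grp) (M : ZGmod G) (n : nat)
  (P : nat -> ZGmod G) (d : forall i, P (S i) -> P i) (eps : P 0 -> M) : Prop :=
  is_hom G (P 0) M eps /\
  (forall j, j < n -> is_hom G (P (S j)) (P j) (d j)) /\
  (forall m : M, exists x : P 0, eps x = m) /\
  (0 < n -> forall y : P 1, eps (d 0 y) = mzero) /\
  (forall j, S (S j) <= n -> forall y : P (S (S j)), d j (d (S j) y) = mzero) /\
  (forall i, i < n -> forall x : P i, in_ker G M P d eps i x ->
       exists y : P (S i), d i y = x) /\
  (forall x : P n, in_ker G M P d eps n x -> x = mzero).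

(* F-split: every associated short exact sequence
   0 -> ker(P_i -> P_{i-1}) -> P_i -> im(P_i -> P_{i-1}) -> 0  (P_{-1} = M)
   splits on restriction to every finite subgroup H, i.e. the kernel is a
   ZH-direct summand: there is a ZH-linear retraction of P_i onto it. *)
Definition F_split (G : Grp) (M : ZGmod G) (n : nat)
  (P : nat -> ZGmod G) (d : forall i, P (S i) -> P i) (eps : P 0 -> M) : Prop :=
  forall i, i <= n -> forall H : G -> Prop, fin_subgroup G H ->
    exists r : P i -> P i,
      (forall x y, r (madd x y) = madd (r x) (r y)) /\
      (forall h x, H h -> r (mact h x) = mact h (r x)) /\
      (forall x, in_ker G M P d eps i (r x)) /\
      (forall x, in_ker G M P d eps i x -> r x = x).

Definition F_projective (G : Grp) (Q : ZGmod G) : Prop :=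
  exists (N : ZGmod G) (s : Q -> tens G N (Delta G)) (p : tens G N (Delta G) -> Q),
    is_hom G Q (tens G N (Delta G)) s /\ is_hom G (tens G N (Delta G)) Q p /\
    forall x, p (s x) = x.

Definition Fpd_le (G : Grp) (M : ZGmod G) (n : nat) : Prop :=
  exists (P : nat -> ZGmod G) (d : forall i, P (S i) -> P i) (eps : P 0 -> M),
    exact_resolution G M n P d eps /\ F_split G M n P d eps /\
    forall i, i <= n -> F_projective G (P i).

Definition Fpd_eq (G : Grp) (M : ZGmod G) (n : nat) : Prop :=
  Fpd_le G M n /\ forall m, m < n -> ~ Fpd_le G M m.

Definition Fcd_eq (G : Grp) (n : nat) : Prop := Fpd_eq G (trivZ G) n.

(* Resolve Z by the F-split "bar" resolution
     ... -> B_2 -> B_1 -> B_0 = Z,   B_j = Z[Delta^j],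
   whose differential at each stage is induced from stabiliser-equivariant
   retractions (points of Delta have finite stabilisers), and let Q_j be its
   cycles.  Comparing with a given F-split F-projective resolution of length n
   by an F-relative Schanuel lemma shows that Q_n is F-projective (n >= 1), so
   the F-surjection  B_(n+1) -> Q_n  has a G-section.  An Eilenberg swindle
   with  F = B_(n+1) (x) Z[N]  then gives
     0 -> F -> B_n + F -> B_(n-1) -> ... -> B_1 -> Z -> 0,
   and every term is a permutation module on a product of copies of Delta (and
   of N), hence has finite stabilisers.  For n = 0 the group is finite and
   0 -> Z[pt] -> Z -> 0  does the job. *)

From Stdlib Require Import List ZArith Lia Classical FunctionalExtensionality
  PropExtensionality ProofIrrelevance ClassicalEpsilon.
Import ListNotations.

Definition msub {G} {M : ZGmod G} (x y : M) : M := madd x (mopp y).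

Lemma madd0l G (M : ZGmod G) (x : M) : madd mzero x = x.
Proof. rewrite maddC. apply madd0. Qed.

Lemma maddNl G (M : ZGmod G) (x : M) : madd (mopp x) x = mzero.
Proof. rewrite maddC. apply maddN. Qed.

Lemma maddACA G (M : ZGmod G) (a b c d : M) :
  madd (madd a b) (madd c d) = madd (madd a c) (madd b d).
Proof.
  rewrite <- !maddA. f_equal. rewrite !maddA. f_equal. apply maddC.
Qed.

Lemma madd_cancel_l G (M : ZGmod G) (a x y : M) : madd a x = madd a y -> x = y.
Proof.
  intros E. rewrite <- (madd0l G M x), <- (madd0l G M y), <- (maddNl G M a),
  <- !maddA, E. reflexivity.
Qed.

Lemma mopp_unique G (M : ZGmod G) (x y : M) : madd x y = mzero -> y = mopp x.
Proof. intros E. apply (madd_cancel_l G M x). rewrite E, maddN. reflexivity. Qed.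

Lemma moppK G (M : ZGmod G) (x : M) : mopp (mopp x) = x.
Proof. symmetry. apply mopp_unique. apply maddNl. Qed.

Lemma mopp_add G (M : ZGmod G) (x y : M) : mopp (madd x y) = madd (mopp x) (mopp y).
Proof.
  symmetry. apply mopp_unique.
  rewrite maddACA, maddN, maddN. apply madd0.
Qed.

Lemma msub_eq0 G (M : ZGmod G) (x y : M) : msub x y = mzero -> x = y.
Proof.
  unfold msub. intros E. rewrite <- (moppK G M y). apply mopp_unique. rewrite maddC. exact E.
Qed.

Lemma msubxx G (M : ZGmod G) (x : M) : msub x x = mzero.
Proof. apply maddN. Qed.

Lemma msub0 G (M : ZGmod G) (a : M) : msub a mzero = a.
Proof. unfold msub. rewrite mopp0, madd0. reflexivity. Qed.

Lemma msub_add G (M : ZGmod G) (a b c d : M) :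
  msub (madd a b) (madd c d) = madd (msub a c) (msub b d).
Proof. unfold msub. rewrite mopp_add. apply maddACA. Qed.

Lemma msub_addK G (M : ZGmod G) (a b : M) : msub (madd a b) b = a.
Proof. unfold msub. rewrite <- maddA, maddN, madd0. reflexivity. Qed.

Lemma madd_msubK G (M : ZGmod G) (a b : M) : madd (msub a b) b = a.
Proof. unfold msub. rewrite <- maddA, maddNl, madd0. reflexivity. Qed.

Lemma mact_opp G (M : ZGmod G) g (x : M) : mact g (mopp x) = mopp (mact g x).
Proof. apply mopp_unique. rewrite <- mactD, maddN. apply mact0. Qed.

Lemma mact_sub G (M : ZGmod G) g (a b : M) : mact g (msub a b) = msub (mact g a) (mact g b).
Proof. unfold msub. rewrite mactD, mact_opp. reflexivity. Qed.

Lemma mactK G (M : ZGmod G) g (x : M) : mact (ginv g) (mact g x) = x.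
Proof. rewrite <- mactM, gmulVl. apply mact1. Qed.

Lemma mactKV G (M : ZGmod G) g (x : M) : mact g (mact (ginv g) x) = x.
Proof. rewrite <- mactM, gmulVr. apply mact1. Qed.

Lemma mact_inj G (M : ZGmod G) g (x y : M) : mact g x = mact g y -> x = y.
Proof. intros E. rewrite <- (mactK G M g x), E, mactK. reflexivity. Qed.

Lemma sactK G (O : GSet G) g (w : O) : sact (ginv g) (sact g w) = w.
Proof. rewrite <- sactM, gmulVl. apply sact1. Qed.

Lemma sactKV G (O : GSet G) g (w : O) : sact g (sact (ginv g) w) = w.
Proof. rewrite <- sactM, gmulVr. apply sact1. Qed.

Definition additive {G} {M N : ZGmod G} (f : M -> N) : Prop :=
  forall x y, f (madd x y) = madd (f x) (f y).

Lemma add0 G (M N : ZGmod G) (f : M -> N) : additive f -> f mzero = mzero.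
Proof.
  intros H. apply (madd_cancel_l G N (f mzero)). rewrite <- H, !madd0. reflexivity.
Qed.

Lemma addN G (M N : ZGmod G) (f : M -> N) :
  additive f -> forall x, f (mopp x) = mopp (f x).
Proof. intros H x. apply mopp_unique. rewrite <- H, maddN. apply add0; auto. Qed.

Lemma addB G (M N : ZGmod G) (f : M -> N) :
  additive f -> forall x y, f (msub x y) = msub (f x) (f y).
Proof. intros H x y. unfold msub. rewrite H, addN; auto. Qed.

Lemma hom_additive G (M N : ZGmod G) f : is_hom G M N f -> additive f.
Proof. intros [H _]. exact H. Qed.

Lemma hom0 G (M N : ZGmod G) f : is_hom G M N f -> f mzero = mzero.
Proof. intros H. apply add0, hom_additive, H. Qed.

Lemma is_hom_comp G (A B C : ZGmod G) (f : A -> B) (g : B -> C) :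
  is_hom G A B f -> is_hom G B C g -> is_hom G A C (fun x => g (f x)).
Proof. intros [F1 F2] [G1 G2]. split; intros; rewrite ?F1, ?G1, ?F2, ?G2; auto. Qed.

Lemma is_hom_id G (A : ZGmod G) : is_hom G A A (fun x => x).
Proof. split; auto. Qed.

Lemma hom_inj G (M N : ZGmod G) (f : M -> N) :
  is_hom G M N f -> (forall x, f x = mzero -> x = mzero) -> forall x x', f x = f x' -> x = x'.
Proof.
  intros [Fa _] Hi x x' E. apply msub_eq0. apply Hi.
  rewrite (addB _ _ _ f Fa), E. apply msubxx.
Qed.

Definition eqd {T : Type} (x y : T) : {x = y} + {x <> y} :=
  excluded_middle_informative (x = y).

Definition cid {A : Type} {P : A -> Prop} (e : exists x, P x) : {x | P x} :=
  constructive_indefinite_description P e.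

Lemma cid_ext A (P Q : A -> Prop) (p : exists x, P x) (q : exists x, Q x) :
  P = Q -> proj1_sig (cid p) = proj1_sig (cid q).
Proof. intros E. subst. rewrite (proof_irrelevance _ p q). reflexivity. Qed.

Lemma nodup_cover T (l : list T) : exists l', NoDup l' /\ forall x, In x l <-> In x l'.
Proof.
  exists (nodup (fun x y => eqd x y) l). split; [apply NoDup_nodup|].
  intros x. symmetry. apply nodup_In.
Qed.

(** Finitely supported functions are summed along a list covering their
   support; [lsum_indep] shows that the choice of list does not matter. *)

Fixpoint lsum {G} {M : ZGmod G} {T : Type} (l : list T) (h : T -> M) : M :=
  match l with
  | [] => mzero
  | a :: l' => madd (h a) (lsum l' h)
  end.

Lemma lsum_app G (M : ZGmod G) T (l1 l2 : list T) (h : T -> M) :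
  lsum (l1 ++ l2) h = madd (lsum l1 h) (lsum l2 h).
Proof.
  induction l1; simpl; [rewrite madd0l; auto|]. rewrite IHl1, maddA. reflexivity.
Qed.

Lemma lsum_ext G (M : ZGmod G) T (l : list T) (h1 h2 : T -> M) :
  (forall w, In w l -> h1 w = h2 w) -> lsum l h1 = lsum l h2.
Proof. induction l; simpl; intros H; auto. rewrite H, IHl; auto. Qed.

Lemma lsum_zero G (M : ZGmod G) T (l : list T) (h : T -> M) :
  (forall w, In w l -> h w = mzero) -> lsum l h = mzero.
Proof. induction l; simpl; intros H; auto. rewrite H, IHl, madd0; auto. Qed.

Lemma lsum_add G (M : ZGmod G) T (l : list T) (h1 h2 : T -> M) :
  lsum l (fun w => madd (h1 w) (h2 w)) = madd (lsum l h1) (lsum l h2).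
Proof.
  induction l; simpl; [rewrite madd0; auto|]. rewrite IHl. apply maddACA.
Qed.

Lemma lsum_mact G (M : ZGmod G) T (l : list T) (h : T -> M) g :
  mact g (lsum l h) = lsum l (fun w => mact g (h w)).
Proof. induction l; simpl; [apply mact0|]. rewrite mactD, IHl; auto. Qed.

Lemma lsum_list_map G (M : ZGmod G) T U (l : list T) (f : T -> U) (h : U -> M) :
  lsum (map f l) h = lsum l (fun w => h (f w)).
Proof. induction l; simpl; auto. rewrite IHl; auto. Qed.

Lemma lsum_indep G (M : ZGmod G) T (l1 : list T) : forall (l2 : list T) (h : T -> M),
  NoDup l1 -> NoDup l2 ->
  (forall w, h w <> mzero -> In w l1) -> (forall w, h w <> mzero -> In w l2) ->
  lsum l1 h = lsum l2 h.
Proof.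
  induction l1 as [|a l1 IH]; intros l2 h N1 N2 C1 C2.
  - simpl. symmetry. apply lsum_zero. intros w _.
    destruct (classic (h w = mzero)) as [E|E]; auto. destruct (C1 w E).
  - inversion N1 as [|a' l1' Na N1']; subst. simpl.
    set (h' := fun w => if eqd w a then mzero else h w).
    assert (Eh' : forall l, ~ In a l -> lsum l h = lsum l h').
    { intros l Hl. apply lsum_ext. intros w Hw. unfold h'.
      destruct (eqd w a); subst; [contradiction|reflexivity]. }
    destruct (in_dec (fun x y => eqd x y) a l2) as [Ia|Ia].
    + destruct (in_split a l2 Ia) as [u [v Euv]]. subst l2.
      apply NoDup_remove in N2. destruct N2 as [N2 Nav].
      rewrite lsum_app. simpl.
      rewrite (Eh' l1 Na), (IH (u ++ v) h' N1' N2).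
      * rewrite <- (Eh' _ Nav), lsum_app, !maddA. f_equal. apply maddC.
      * intros w Hw. unfold h' in Hw. destruct (eqd w a); [contradiction|].
        destruct (C1 w Hw); [congruence|auto].
      * intros w Hw. unfold h' in Hw. destruct (eqd w a); [contradiction|].
        specialize (C2 w Hw). apply in_app_or in C2. apply in_or_app.
        destruct C2 as [C|[C|C]]; auto. congruence.
    + assert (Ha : h a = mzero).
      { destruct (classic (h a = mzero)); auto. exfalso. apply Ia. apply C2; auto. }
      rewrite Ha, madd0l. apply IH; auto.
      intros w Hw. destruct (C1 w Hw); auto. subst. contradiction.
Qed.

Definition tval {G} {M : ZGmod G} {O : GSet G} (f : tens G M O) : O -> M := proj1_sig f.

Lemma tens_ext G (M : ZGmod G) (O : GSet G) (f g : tens G M O) :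
  (forall w, tval f w = tval g w) -> f = g.
Proof. intros H. apply sig_eq'. apply functional_extensionality. exact H. Qed.

Lemma tval_add G (M : ZGmod G) (O : GSet G) (f g : tens G M O) w :
  tval (madd f g) w = madd (tval f w) (tval g w).
Proof. reflexivity. Qed.

Lemma tval_opp G (M : ZGmod G) (O : GSet G) (f : tens G M O) w :
  tval (mopp f) w = mopp (tval f w).
Proof. reflexivity. Qed.

Lemma tval_act G (M : ZGmod G) (O : GSet G) (f : tens G M O) g w :
  tval (mact g f) w = mact g (tval f (sact (ginv g) w)).
Proof. reflexivity. Qed.

Lemma tens_cover G (M : ZGmod G) (O : GSet G) (f : tens G M O) :
  exists l, NoDup l /\ forall w, tval f w <> mzero -> In w l.
Proof.
  destruct f as [f [l H]]. destruct (nodup_cover _ l) as [l' [N E]].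
  exists l'. split; auto. intros w Hw. apply E, H, Hw.
Qed.

(* The elementary tensor  n (x) w : the function with value n at w, 0 elsewhere. *)
Lemma delta_pf G (M : ZGmod G) (O : GSet G) (w : O) (n : M) :
  finsupp G M O (fun u => if eqd u w then n else mzero).
Proof. exists [w]. intros u H. destruct (eqd u w); [left; auto | contradiction]. Qed.

Definition delta {G} {M : ZGmod G} {O : GSet G} (w : O) (n : M) : tens G M O :=
  exist _ _ (delta_pf G M O w n).

Lemma tval_delta G (M : ZGmod G) (O : GSet G) (w : O) (n : M) u :
  tval (@delta G M O w n) u = if eqd u w then n else mzero.
Proof. reflexivity. Qed.

Lemma delta_add G (M : ZGmod G) (O : GSet G) (w : O) (a b : M) :
  @delta G M O w (madd a b) = madd (delta w a) (delta w b).
Proof. apply tens_ext. intros u. simpl. destruct (eqd u w); auto. rewrite madd0; auto. Qed.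

Lemma delta_zero G (M : ZGmod G) (O : GSet G) (w : O) : @delta G M O w mzero = mzero.
Proof. apply tens_ext. intros u. simpl. destruct (eqd u w); auto. Qed.

Lemma delta_act G (M : ZGmod G) (O : GSet G) (w : O) (n : M) g :
  mact g (@delta G M O w n) = delta (sact g w) (mact g n).
Proof.
  apply tens_ext. intros u. rewrite tval_act, !tval_delta.
  destruct (eqd (sact (ginv g) u) w), (eqd u (sact g w)); subst.
  - reflexivity.
  - exfalso. apply n0. rewrite sactKV. auto.
  - exfalso. apply n0. rewrite sactK. auto.
  - apply mact0.
Qed.

Lemma delta_ind G (M : ZGmod G) (O : GSet G) (P : tens G M O -> Prop) :
  P mzero -> (forall w n, P (delta w n)) -> (forall a b, P a -> P b -> P (madd a b)) ->
  forall f, P f.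
Proof.
  intros H0 Hd Ha.
  assert (K : forall l f, (forall w, tval f w <> mzero -> In w l) -> P f).
  { induction l as [|a l IH]; intros f C.
    - replace f with (@mzero G (tens G M O)); auto.
      apply tens_ext. intros w. destruct (classic (tval f w = mzero)) as [E|E]; auto.
      destruct (C w E).
    -
      set (f' := madd f (mopp (delta a (tval f a)))).
      replace f with (madd (delta a (tval f a)) f').
      + apply Ha; auto. apply IH. intros w Hw. unfold f' in Hw.
        rewrite tval_add, tval_opp, tval_delta in Hw.
        destruct (eqd w a); [subst; rewrite maddN in Hw; contradiction|].
        rewrite mopp0, madd0 in Hw. destruct (C w Hw); auto. congruence.
      + unfold f'. rewrite maddC, <- maddA, maddNl, madd0. reflexivity. }
  intros [f [l Hl]]. exact (K l (exist _ f (ex_intro _ l Hl)) Hl).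
Qed.

Lemma hom_ext_delta G (M N : ZGmod G) (O : GSet G) (f1 f2 : tens G M O -> N) :
  additive f1 -> additive f2 -> (forall w n, f1 (delta w n) = f2 (delta w n)) ->
  forall x, f1 x = f2 x.
Proof.
  intros A1 A2 H. apply delta_ind.
  - rewrite !add0; auto.
  - exact H.
  - intros a b Ea Eb. rewrite A1, A2, Ea, Eb. reflexivity.
Qed.

Definition iso {G} (M N : ZGmod G) : Type :=
  {f : M -> N & {g : N -> M | is_hom G M N f /\ is_hom G N M g /\
     (forall x, g (f x) = x) /\ (forall y, f (g y) = y)}}.
Definition isof {G} {M N : ZGmod G} (i : iso M N) : M -> N := projT1 i.
Definition isog {G} {M N : ZGmod G} (i : iso M N) : N -> M := proj1_sig (projT2 i).

Lemma isof_hom G (M N : ZGmod G) (i : @iso G M N) : is_hom G M N (isof i).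
Proof. destruct i as [f [g H]]. apply H. Qed.
Lemma isog_hom G (M N : ZGmod G) (i : @iso G M N) : is_hom G N M (isog i).
Proof. destruct i as [f [g H]]. apply H. Qed.
Lemma isogf G (M N : ZGmod G) (i : @iso G M N) x : isog i (isof i x) = x.
Proof. destruct i as [f [g H]]. apply H. Qed.
Lemma isofg G (M N : ZGmod G) (i : @iso G M N) y : isof i (isog i y) = y.
Proof. destruct i as [f [g H]]. apply H. Qed.

Definition mk_iso {G} (M N : ZGmod G) (f : M -> N) (g : N -> M)
  (H : is_hom G M N f /\ is_hom G N M g /\ (forall x, g (f x) = x) /\ (forall y, f (g y) = y))
  : iso M N :=
  existT _ f (exist _ g H).

Definition iso_refl {G} (M : ZGmod G) : iso M M.
Proof. refine (mk_iso M M (fun x => x) (fun x => x) _). repeat split; auto. Defined.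

Definition iso_sym {G} (M N : ZGmod G) (i : iso M N) : iso N M.
Proof.
  refine (mk_iso N M (isog i) (isof i) _).
  split; [apply isog_hom|]. split; [apply isof_hom|].
  split; intros; [apply isofg|apply isogf].
Defined.

Definition iso_trans {G} (A B C : ZGmod G) (i : iso A B) (j : iso B C) : iso A C.
Proof.
  refine (mk_iso A C (fun x => isof j (isof i x)) (fun z => isog i (isog j z)) _).
  split; [apply is_hom_comp; apply isof_hom|].
  split; [apply is_hom_comp; apply isog_hom|].
  split; intros; rewrite ?isogf, ?isofg; auto.
Defined.

Lemma bij_iso G (M N : ZGmod G) (f : M -> N) : is_hom G M N f ->
  (forall x, f x = mzero -> x = mzero) -> (forall y, exists x, f x = y) -> inhabited (iso M N).
Proof.
  intros Hf Hi Hs. pose proof (hom_inj G M N f Hf Hi) as Inj. destruct Hf as [Fa Fg].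
  set (g := fun y => proj1_sig (cid (Hs y))).
  assert (Hg : forall y, f (g y) = y) by (intros y; exact (proj2_sig (cid (Hs y)))).
  constructor. refine (mk_iso M N f g _).
  split; [split; auto|split; [split|split]].
  - intros x y. apply Inj. rewrite Fa, !Hg. reflexivity.
  - intros h x. apply Inj. rewrite Fg, !Hg. reflexivity.
  - intros x. apply Inj. rewrite Hg. reflexivity.
  - exact Hg.
Qed.

Definition zmod (G : Grp) : ZGmod G.
Proof.
  refine {| mcar := unit; madd := fun _ _ => tt; mzero := tt; mopp := fun _ => tt;
            mact := fun _ _ => tt |}; intros; try reflexivity; destruct x; reflexivity.
Defined.

Definition dsum {G} (M N : ZGmod G) : ZGmod G.
Proof.
  refine {| mcar := (mcar M * mcar N)%type;
            madd := fun a b => (madd (fst a) (fst b), madd (snd a) (snd b));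
            mzero := (mzero, mzero);
            mopp := fun a => (mopp (fst a), mopp (snd a));
            mact := fun g a => (mact g (fst a), mact g (snd a)) |}; intros; simpl.
  - rewrite !maddA; auto.
  - rewrite (maddC _ _ (fst x)), (maddC _ _ (snd x)); auto.
  - rewrite !madd0; destruct x; auto.
  - rewrite !maddN; auto.
  - rewrite !mactD; auto.
  - rewrite !mact1; destruct x; auto.
  - rewrite !mactM; auto.
Defined.

Lemma dsum_ext G (M N : ZGmod G) (x y : dsum M N) : fst x = fst y -> snd x = snd y -> x = y.
Proof. destruct x, y; simpl; intros; subst; auto. Qed.

Lemma is_hom_dsum G (A B C D : ZGmod G) (f : A -> C) (g : B -> D) :
  is_hom G A C f -> is_hom G B D g ->
  is_hom G (dsum A B) (dsum C D) (fun x => (f (fst x), g (snd x))).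
Proof. intros [F1 F2] [G1 G2]. split; intros; simpl; rewrite ?F1, ?G1, ?F2, ?G2; auto. Qed.

Definition iso_dsum {G} (A A' B B' : ZGmod G) (i : iso A A') (j : iso B B') :
  iso (dsum A B) (dsum A' B').
Proof.
  refine (mk_iso (dsum A B) (dsum A' B') (fun x => (isof i (fst x), isof j (snd x)) : dsum A' B')
                 (fun y => (isog i (fst y), isog j (snd y)) : dsum A B) _).
  split; [apply is_hom_dsum; apply isof_hom|]. split; [apply is_hom_dsum; apply isog_hom|].
  split; intros [a b]; simpl; rewrite ?isogf, ?isofg; auto.
Defined.

Definition iso_swap {G} (A B : ZGmod G) : iso (dsum A B) (dsum B A).
Proof.
  refine (mk_iso (dsum A B) (dsum B A) (fun x => (snd x, fst x) : dsum B A)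
                 (fun y => (snd y, fst y) : dsum A B) _).
  split; [split|split; [split|split]]; intros; simpl; auto.
  - destruct x; auto.
  - destruct y; auto.
Defined.

Record is_submod {G} {M : ZGmod G} (P : M -> Prop) : Prop := {
  sm0 : P mzero;
  smA : forall x y, P x -> P y -> P (madd x y);
  smN : forall x, P x -> P (mopp x);
  smG : forall g x, P x -> P (mact g x) }.

Definition submod {G} (M : ZGmod G) (P : M -> Prop) (HP : is_submod P) : ZGmod G.
Proof.
  refine {| mcar := {x : M | P x};
            madd := fun a b => exist _ (madd (proj1_sig a) (proj1_sig b))
                                 (smA P HP _ _ (proj2_sig a) (proj2_sig b));
            mzero := exist _ mzero (sm0 P HP);
            mopp := fun a => exist _ (mopp (proj1_sig a)) (smN P HP _ (proj2_sig a));
            mact := fun g a => exist _ (mact g (proj1_sig a)) (smG P HP _ _ (proj2_sig a)) |};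
  intros; apply sig_eq'; simpl.
  - apply maddA. - apply maddC. - apply madd0. - apply maddN. - apply mactD.
  - apply mact1. - apply mactM.
Defined.

Definition iso_sub {G} (M : ZGmod G) (P P' : M -> Prop) (HP : is_submod P) (HP' : is_submod P')
  (E : forall x, P x <-> P' x) : iso (submod M P HP) (submod M P' HP').
Proof.
  refine (mk_iso (submod M P HP) (submod M P' HP')
            (fun x => exist _ (proj1_sig x) (proj1 (E _) (proj2_sig x)) : submod M P' HP')
            (fun y => exist _ (proj1_sig y) (proj2 (E _) (proj2_sig y)) : submod M P HP) _).
  repeat split; intros; apply sig_eq'; reflexivity.
Defined.

Lemma lsum_sub G (M : ZGmod G) T (S : M -> Prop) (HS : is_submod S) (l : list T) (h : T -> M) :
  (forall w, S (h w)) -> S (lsum l h).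
Proof. intros H. induction l; simpl; [apply (sm0 S HS)|apply (smA S HS); auto]. Qed.

Lemma ker_submod G (A C : ZGmod G) (pi : A -> C) :
  is_hom G A C pi -> is_submod (fun x => pi x = mzero).
Proof.
  intros [Ha Hg]. split.
  - apply add0; auto.
  - intros x y Hx Hy. rewrite Ha, Hx, Hy, madd0. reflexivity.
  - intros x Hx. rewrite addN, Hx; auto. apply mopp0.
  - intros g x Hx. rewrite Hg, Hx. apply mact0.
Qed.

Definition kermod {G} {A C : ZGmod G} (pi : A -> C) (Hpi : is_hom G A C pi) : ZGmod G :=
  submod A (fun x => pi x = mzero) (ker_submod G A C pi Hpi).

(** * Inducing G-maps from stabiliser-equivariant data

   Fix a representative [orbit_rep w] of every G-orbit and an element
   [transporter w] moving it to [w].  A family of additive maps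
   [th w : N -> M], each equivariant for the stabiliser of [w], spreads out to a
   G-map  N (x) Z[Omega] -> M  sending  n (x) w  to  g . th u (g^-1 n)  where
   [u] is the representative of the orbit of [w] and [g u = w]. *)

Definition orbit_rel {G} {O : GSet G} (w u : O) : Prop := exists g, sact g u = w.

Lemma orbit_rel_refl G (O : GSet G) (w : O) : exists u, orbit_rel w u.
Proof. exists w, gone. apply sact1. Qed.

Definition orbit_rep {G} {O : GSet G} (w : O) : O := proj1_sig (cid (orbit_rel_refl G O w)).

Lemma orbit_rep_spec G (O : GSet G) (w : O) : exists g, sact g (orbit_rep w) = w.
Proof. exact (proj2_sig (cid (orbit_rel_refl G O w))). Qed.

Lemma orbit_rep_act G (O : GSet G) (w : O) h : orbit_rep (sact h w) = orbit_rep w.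
Proof.
  unfold orbit_rep. apply cid_ext. apply functional_extensionality. intros u.
  apply propositional_extensionality. unfold orbit_rel. split.
  - intros [g E]. exists (gmul (ginv h) g). rewrite sactM, E, sactK. reflexivity.
  - intros [g E]. exists (gmul h g). rewrite sactM, E. reflexivity.
Qed.

Definition transporter {G} {O : GSet G} (w : O) : G := proj1_sig (cid (orbit_rep_spec G O w)).

Lemma transporter_spec G (O : GSet G) (w : O) : sact (transporter w) (orbit_rep w) = w.
Proof. exact (proj2_sig (cid (orbit_rep_spec G O w))). Qed.

Definition stab {G} {O : GSet G} (w : O) : G -> Prop := fun g => sact g w = w.

Definition stab_equivariant {G} {N M : ZGmod G} {O : GSet G} (th : O -> N -> M) : Prop :=
  forall w c x, stab w c -> th w (mact c x) = mact c (th w x).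

Definition spread {G} {N M : ZGmod G} {O : GSet G} (th : O -> N -> M) (w : O) (n : N) : M :=
  mact (transporter w) (th (orbit_rep w) (mact (ginv (transporter w)) n)).

Lemma spread_additive G (N M : ZGmod G) (O : GSet G) (th : O -> N -> M) :
  (forall w, additive (th w)) -> forall w, additive (spread th w).
Proof. intros H w x y. unfold spread. rewrite mactD, H, mactD. reflexivity. Qed.

(* Spreading is G-equivariant: the two transporters to [w] and [h w] differ by
   an element of the stabiliser of the orbit representative. *)
Lemma spread_equivariant G (N M : ZGmod G) (O : GSet G) (th : O -> N -> M) :
  stab_equivariant th -> forall w h n, spread th (sact h w) (mact h n) = mact h (spread th w n).
Proof.
  intros Hs w h n. unfold spread. rewrite orbit_rep_act.
  pose proof (transporter_spec G O w) as E1.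
  pose proof (transporter_spec G O (sact h w)) as E2. rewrite orbit_rep_act in E2.
  set (u := orbit_rep w) in *. set (g := transporter w) in *.
  set (g' := transporter (sact h w)) in *.
  set (c := gmul (ginv g') (gmul h g)).
  assert (Ec : stab u c).
  { unfold stab, c. rewrite !sactM, E1, <- E2, sactK. reflexivity. }
  assert (E3 : mact (ginv g') (mact h n) = mact c (mact (ginv g) n)).
  { unfold c. rewrite <- !mactM. f_equal. rewrite <- !gmulA, gmulVr, gmul1r. reflexivity. }
  rewrite E3, Hs by exact Ec. unfold c. rewrite <- !mactM. f_equal.
  rewrite gmulA, gmulVr, gmul1l. reflexivity.
Qed.

Definition induced {G} {N M : ZGmod G} {O : GSet G} (th : O -> N -> M) (f : tens G N O) : M :=
  lsum (proj1_sig (cid (tens_cover G N O f))) (fun w => spread th w (tval f w)).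

Section Induced.
Variables (G : Grp) (N M : ZGmod G) (O : GSet G) (th : O -> N -> M).
Hypothesis th_additive : forall w, additive (th w).
Hypothesis th_equivariant : stab_equivariant th.

Lemma induced_list f l : NoDup l -> (forall w, tval f w <> mzero -> In w l) ->
  induced th f = lsum l (fun w => spread th w (tval f w)).
Proof.
  intros Nl Cl. unfold induced. destruct (cid (tens_cover G N O f)) as [l0 [N0 C0]]. simpl.
  pose proof (spread_additive G N M O th th_additive) as Ha.
  apply lsum_indep; auto; intros w Hw; [apply C0|apply Cl]; intros E; apply Hw;
    rewrite E; apply add0, Ha.
Qed.

Lemma induced_additive : additive (induced th).
Proof.
  intros f1 f2.
  destruct (tens_cover G N O f1) as [l1 [_ C1]]. destruct (tens_cover G N O f2) as [l2 [_ C2]].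
  destruct (nodup_cover _ (l1 ++ l2)) as [l [Nl El]].
  assert (C1' : forall w, tval f1 w <> mzero -> In w l) by (intros; apply El, in_or_app; auto).
  assert (C2' : forall w, tval f2 w <> mzero -> In w l) by (intros; apply El, in_or_app; auto).
  rewrite !(induced_list _ l Nl); auto.
  - rewrite <- lsum_add. apply lsum_ext. intros w _. rewrite tval_add.
    apply spread_additive, th_additive.
  - intros w H. rewrite tval_add in H.
    destruct (classic (tval f1 w = mzero)) as [E|E]; auto.
    rewrite E, madd0l in H. auto.
Qed.

Lemma induced_act g f : induced th (mact g f) = mact g (induced th f).
Proof.
  destruct (tens_cover G N O f) as [l [Nl Cl]].
  rewrite (induced_list f l Nl Cl), (induced_list _ (map (sact g) l)).
  - rewrite lsum_list_map, lsum_mact. apply lsum_ext. intros w _.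
    rewrite tval_act, sactK. apply spread_equivariant, th_equivariant.
  - apply NoDup_map_NoDup_ForallPairs; auto. intros x y _ _ E.
    rewrite <- (sactK G O g x), E, sactK. reflexivity.
  - intros w H. rewrite tval_act in H. rewrite <- (sactKV G O g w).
    apply in_map, Cl. intros E. apply H. rewrite E. apply mact0.
Qed.

Lemma induced_hom : is_hom G (tens G N O) M (induced th).
Proof. split; [apply induced_additive | apply induced_act]. Qed.

Lemma induced_delta w n :
  exists g u, sact g u = w /\ induced th (delta w n) = mact g (th u (mact (ginv g) n)).
Proof.
  exists (transporter w), (orbit_rep w). split; [apply transporter_spec|].
  rewrite (induced_list _ [w]).
  - cbn [lsum]. rewrite tval_delta. unfold spread.
    destruct (eqd w w); [|congruence]. rewrite madd0. reflexivity.
  - constructor; [auto|constructor].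
  - intros u H. rewrite tval_delta in H. destruct (eqd u w); [left; auto|contradiction].
Qed.

Lemma induced_in_submod (S : M -> Prop) : is_submod S ->
  (forall w n, S (th w n)) -> forall f, S (induced th f).
Proof.
  intros HS Hth f. unfold induced. apply lsum_sub; auto.
  intros w. unfold spread. apply (smG S HS); auto.
Qed.

End Induced.

Lemma Delta_stab_fin G (w : Delta G) : fin_subgroup G (stab w).
Proof.
  unfold stab. split; [|split; [|split]].
  - apply sact1.
  - intros x y Hx Hy. rewrite sactM, Hy, Hx. reflexivity.
  - intros x Hx. rewrite <- Hx at 1. apply sactK.
  - (* the stabiliser of the coset g0 K is the conjugate g0 K g0^-1 *)
    destruct w as [[K S] pf].
    assert (pf' := pf). destruct pf' as [[HK1 [_ [_ [lK HlK]]]] [g0 Hg0]]. simpl in *.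
    exists (map (fun k => gmul g0 (gmul k (ginv g0))) lK).
    intros g Hg.
    apply (f_equal (@proj1_sig _ _)) in Hg. simpl in Hg. injection Hg as E.
    assert (Sg0 : S g0). { apply Hg0. exists gone. split; auto. rewrite gmul1r; auto. }
    assert (S1 : S (gmul g g0)) by (rewrite <- E, gKl; auto).
    apply Hg0 in S1. destruct S1 as [k [Kk Ek]].
    replace g with (gmul g0 (gmul k (ginv g0))).
    + apply (in_map (fun k => gmul g0 (gmul k (ginv g0)))). apply HlK. auto.
    + rewrite gmulA, <- Ek, <- gmulA, gmulVr, gmul1r. reflexivity.
Qed.

Lemma fs_Delta G : finite_stabilisers G (Delta G).
Proof. intros w. destruct (Delta_stab_fin G w) as [_ [_ [_ [l Hl]]]]. exists l. exact Hl. Qed.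

(* Every finite subgroup H fixes a point of Delta, namely the coset H itself. *)
Lemma Delta_fixed (G : Grp) (H : G -> Prop) : fin_subgroup G H ->
  exists w0 : Delta G, forall h, H h -> sact h w0 = w0.
Proof.
  intros HH. assert (pf : fin_subgroup G (fst (H, H)) /\ is_lcoset G (fst (H, H)) (snd (H, H))).
  { split; auto. exists gone. intros x. simpl. split.
    - intros Hx. exists x. split; auto. rewrite gmul1l; auto.
    - intros [k [Kk E]]. subst. rewrite gmul1l; auto. }
  exists (exist _ (H, H) pf). intros h Hh. apply sig_eq'. simpl. f_equal.
  apply functional_extensionality. intros x. apply propositional_extensionality.
  destruct HH as [H1 [HM [HI _]]]. split.
  - intros Hx. rewrite <- (gKr G h x). auto.
  - intros Hx. auto.
Qed.

Lemma triv_fin G : fin_subgroup G (fun g => g = gone).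
Proof.
  split; [|split; [|split]]; auto.
  - intros x y -> ->. apply gmul1l.
  - intros x ->. apply ginv1.
  - exists [gone]. intros x ->. left; auto.
Qed.

Lemma Delta_pt G : inhabited (Delta G).
Proof. destruct (Delta_fixed G _ (triv_fin G)) as [w _]. constructor. exact w. Qed.

(** A submodule [Q] of [M] is F-split if it is a ZH-direct summand for every
   finite subgroup H, i.e. admits an H-equivariant additive retraction; an
   epimorphism is F-surjective if it has an H-equivariant additive section for
   every finite H.  For a surjection these notions correspond: the kernel is
   F-split iff the map is F-surjective. *)

Definition retraction_onto {G} {M : ZGmod G} (Q : M -> Prop) (H : G -> Prop) (r : M -> M) : Prop :=
  additive r /\ (forall h x, H h -> r (mact h x) = mact h (r x)) /\
  (forall x, Q (r x)) /\ (forall x, Q x -> r x = x).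

Definition F_split_sub {G} (M : ZGmod G) (Q : M -> Prop) : Prop :=
  is_submod Q /\ forall H, fin_subgroup G H -> exists r, retraction_onto Q H r.

Definition section_of {G} {A C : ZGmod G} (pi : A -> C) (H : G -> Prop) (s : C -> A) : Prop :=
  additive s /\ (forall h x, H h -> s (mact h x) = mact h (s x)) /\ (forall c, pi (s c) = c).

Definition F_surjective {G} {A C : ZGmod G} (pi : A -> C) : Prop :=
  forall H, fin_subgroup G H -> exists s, section_of pi H s.

Lemma F_surjective_surj G (A C : ZGmod G) (pi : A -> C) :
  F_surjective pi -> forall c, exists a, pi a = c.
Proof.
  intros H c. destruct (H _ (triv_fin G)) as [s [_ [_ Hs]]]. exists (s c). apply Hs.
Qed.

(* A retraction [r] onto the kernel yields the section  c |-> a - r a  for any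
   preimage [a] of [c]. *)
Lemma section_of_retraction G (A C : ZGmod G) (pi : A -> C) (H : G -> Prop) (r : A -> A) :
  is_hom G A C pi -> (forall c, exists a, pi a = c) ->
  retraction_onto (fun x => pi x = mzero) H r -> exists s, section_of pi H s.
Proof.
  intros [Pa Pg] Hsurj [Ra [Rg [Rk Rf]]].
  set (pre := fun c => proj1_sig (cid (Hsurj c))).
  assert (Hpre : forall c, pi (pre c) = c) by (intros c; exact (proj2_sig (cid (Hsurj c)))).
  assert (K : forall a b, pi a = pi b -> msub a (r a) = msub b (r b)).
  { intros a b E. assert (Hk : pi (msub a b) = mzero).
    { rewrite (addB _ _ _ pi Pa), E. apply msubxx. }
    apply Rf in Hk.
    rewrite <- (madd_msubK G A a b), maddC, Ra, msub_add, Hk, msubxx, madd0. reflexivity. }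
  exists (fun c => msub (pre c) (r (pre c))). split; [|split].
  - intros x y. rewrite (K (pre (madd x y)) (madd (pre x) (pre y))).
    + rewrite Ra. apply msub_add.
    + rewrite Pa, !Hpre. reflexivity.
  - intros h x Hh. rewrite (K (pre (mact h x)) (mact h (pre x))).
    + rewrite Rg by auto. symmetry. apply mact_sub.
    + rewrite Pg, !Hpre. reflexivity.
  - intros c. rewrite (addB _ _ _ pi Pa), Hpre, Rk, msub0. reflexivity.
Qed.

(** Let [Q] be an F-split submodule of [M].  Every point of Delta has a finite
   stabiliser, so we may choose a stabiliser-equivariant retraction onto [Q]
   at each point and induce the G-map  [bar_map] : M (x) Z[Delta] -> M.
   It maps onto [Q] and sends  x (x) w  to  x  for x in [Q]; for a finite
   subgroup H with fixed point [w0] in Delta,  f |-> f - bar_map f (x) w0  is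
   an H-retraction onto the kernel, which is therefore again F-split. *)

Section BarStep.
Variables (G : Grp) (M : ZGmod G) (Q : M -> Prop) (HQ : F_split_sub M Q).

Definition bar_retraction (w : Delta G) : M -> M :=
  proj1_sig (cid (proj2 HQ (stab w) (Delta_stab_fin G w))).

Lemma bar_retraction_spec w : retraction_onto Q (stab w) (bar_retraction w).
Proof. exact (proj2_sig (cid (proj2 HQ (stab w) (Delta_stab_fin G w)))). Qed.

Definition bar_map : tens G M (Delta G) -> M := induced bar_retraction.

Lemma bar_retraction_additive w : additive (bar_retraction w).
Proof. apply bar_retraction_spec. Qed.

Lemma bar_retraction_equivariant : stab_equivariant bar_retraction.
Proof. intros w c x Hc. apply (bar_retraction_spec w). exact Hc. Qed.

Lemma bar_map_hom : is_hom G _ M bar_map.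
Proof. apply induced_hom; [apply bar_retraction_additive|apply bar_retraction_equivariant]. Qed.

Lemma bar_map_in : forall f, Q (bar_map f).
Proof.
  apply induced_in_submod; [apply HQ|]. intros w n. apply bar_retraction_spec.
Qed.

Lemma bar_map_delta w x : Q x -> bar_map (delta w x) = x.
Proof.
  intros Qx. destruct (induced_delta G M M (Delta G) bar_retraction
    bar_retraction_additive w x) as [g [u [_ E]]].
  unfold bar_map. rewrite E. destruct (bar_retraction_spec u) as [_ [_ [_ Hf]]].
  rewrite Hf; [apply mactKV|]. apply (smG Q (proj1 HQ)). exact Qx.
Qed.

Lemma bar_map_kernel_F_split : F_split_sub (tens G M (Delta G)) (fun f => bar_map f = mzero).
Proof.
  destruct bar_map_hom as [Ha Hg].
  split; [apply ker_submod, bar_map_hom|].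
  intros H HH. destruct (Delta_fixed G H HH) as [w0 Hw0].
  exists (fun f => msub f (delta w0 (bar_map f))). split; [|split; [|split]].
  - intros x y. rewrite Ha, delta_add. apply msub_add.
  - intros h x Hh. rewrite Hg, mact_sub, delta_act, Hw0; auto.
  - intros x. rewrite (addB _ _ _ bar_map Ha), bar_map_delta; [apply msubxx|apply bar_map_in].
  - intros x Hx. cbv beta. rewrite Hx, delta_zero. apply msub0.
Qed.

End BarStep.

(** The basic property of F-projectives is that they lift along F-surjections;
   for N (x) Z[Delta] this follows by inducing from chosen stabiliser-equivariant
   sections at the points of Delta. *)

Lemma lift_from_Delta G (N A C : ZGmod G) (pi : A -> C) (phi : tens G N (Delta G) -> C) :
  is_hom G A C pi -> F_surjective pi -> is_hom G _ C phi ->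
  exists psi, is_hom G _ A psi /\ forall x, pi (psi x) = phi x.
Proof.
  intros Hpi Hsur Hphi.
  set (sg := fun w : Delta G => proj1_sig (cid (Hsur (stab w) (Delta_stab_fin G w)))).
  assert (Hsg : forall w, section_of pi (stab w) (sg w)).
  { intros w. exact (proj2_sig (cid (Hsur (stab w) (Delta_stab_fin G w)))). }
  set (th := fun (w : Delta G) (n : N) => sg w (phi (delta w n))).
  assert (Ha : forall w, additive (th w)).
  { intros w x y. unfold th. rewrite delta_add, (proj1 Hphi). apply (Hsg w). }
  assert (He : stab_equivariant th).
  { intros w c x Hc. unfold th. destruct (Hsg w) as [_ [Hg _]].
    rewrite <- (Hg c _ Hc), <- (proj2 Hphi), delta_act, Hc. reflexivity. }
  exists (induced th). split; [exact (induced_hom G N A _ th Ha He)|].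
  apply hom_ext_delta.
  - apply hom_additive, (is_hom_comp G _ A C); [exact (induced_hom G N A _ th Ha He)|exact Hpi].
  - apply hom_additive, Hphi.
  - intros w n. destruct (induced_delta G N A _ th Ha w n) as [g [u [E1 E2]]].
    rewrite E2, (proj2 Hpi). unfold th. destruct (Hsg u) as [_ [_ Hc]].
    rewrite Hc, <- (proj2 Hphi), delta_act, mactKV, E1. reflexivity.
Qed.

Lemma lifting G (P A C : ZGmod G) (pi : A -> C) (phi : P -> C) :
  F_projective G P -> is_hom G A C pi -> F_surjective pi -> is_hom G P C phi ->
  exists psi : P -> A, is_hom G P A psi /\ forall x, pi (psi x) = phi x.
Proof.
  intros [N [s [p [Hs [Hp Hps]]]]] Hpi Hsur Hphi.
  destruct (lift_from_Delta G N A C pi (fun f => phi (p f)) Hpi Hsur) as [psi [Hpsi E]].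
  { apply (is_hom_comp G _ P C); auto. }
  exists (fun x => psi (s x)). split; [apply is_hom_comp; auto|].
  intros x. rewrite E, Hps. reflexivity.
Qed.

Lemma Fproj_tens G (N : ZGmod G) : F_projective G (tens G N (Delta G)).
Proof. exists N, (fun x => x), (fun x => x). split; [apply is_hom_id|]. split; [apply is_hom_id|auto]. Qed.

Lemma Fproj_retract G (P Q : ZGmod G) (s : Q -> P) (p : P -> Q) :
  F_projective G P -> is_hom G Q P s -> is_hom G P Q p -> (forall x, p (s x) = x) ->
  F_projective G Q.
Proof.
  intros [N [s' [p' [Hs' [Hp' Hps']]]]] Hs Hp Hps.
  exists N, (fun x => s' (s x)), (fun y => p (p' y)).
  split; [apply is_hom_comp; auto|]. split; [apply is_hom_comp; auto|].
  intros x. rewrite Hps', Hps. reflexivity.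
Qed.

Lemma Fproj_iso G (P Q : ZGmod G) (i : iso P Q) : F_projective G P -> F_projective G Q.
Proof.
  intros HP. apply (Fproj_retract G P Q (isog i) (isof i)); auto.
  apply isog_hom. apply isof_hom. apply isofg.
Qed.

Lemma Fproj_zero G : F_projective G (zmod G).
Proof.
  exists (zmod G), (fun _ => mzero), (fun _ => tt).
  split; [split|split; [split|]]; intros.
  - symmetry. apply madd0.
  - symmetry. apply mact0.
  - reflexivity.
  - reflexivity.
  - destruct x; reflexivity.
Qed.

Lemma Fproj_dsum_l G (A B : ZGmod G) : F_projective G (dsum A B) -> F_projective G A.
Proof.
  intros H. apply (Fproj_retract G (dsum A B) A (fun a => (a, mzero) : dsum A B) fst H).
  - split; intros; apply dsum_ext; simpl; auto. symmetry; apply madd0. symmetry; apply mact0.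
  - split; intros; reflexivity.
  - intros; reflexivity.
Qed.

Lemma pair_finsupp G (M N : ZGmod G) (O : GSet G) (f : tens G M O) (g : tens G N O) :
  finsupp G (dsum M N) O (fun w => (tval f w, tval g w)).
Proof.
  destruct f as [f [l1 H1]], g as [g [l2 H2]]. exists (l1 ++ l2). intros w Hw. apply in_or_app.
  simpl in *. destruct (classic (f w = mzero)) as [E|E]; auto.
  right. apply H2. intros E'. apply Hw. rewrite E, E'. reflexivity.
Qed.
Lemma fst_finsupp G (M N : ZGmod G) (O : GSet G) (f : tens G (dsum M N) O) :
  finsupp G M O (fun w => fst (tval f w)).
Proof.
  destruct f as [f [l H]]. exists l. intros w Hw. apply H. intros E. apply Hw. simpl. rewrite E. auto.
Qed.
Lemma snd_finsupp G (M N : ZGmod G) (O : GSet G) (f : tens G (dsum M N) O) :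
  finsupp G N O (fun w => snd (tval f w)).
Proof.
  destruct f as [f [l H]]. exists l. intros w Hw. apply H. intros E. apply Hw. simpl. rewrite E. auto.
Qed.

Definition tens_dsum_iso {G} (M N : ZGmod G) (O : GSet G) :
  iso (dsum (tens G M O) (tens G N O)) (tens G (dsum M N) O).
Proof.
  refine (mk_iso (dsum (tens G M O) (tens G N O)) (tens G (dsum M N) O)
    (fun x : dsum (tens G M O) (tens G N O) => exist _ _ (pair_finsupp G M N O (fst x) (snd x)))
    (fun f : tens G (dsum M N) O =>
       (exist _ _ (fst_finsupp G M N O f), exist _ _ (snd_finsupp G M N O f))) _).
  split; [split|split; [split|split]].
  - intros x y. apply tens_ext. intros w. reflexivity.
  - intros g x. apply tens_ext. intros w. reflexivity.
  - intros x y. apply dsum_ext; apply tens_ext; intros w; reflexivity.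
  - intros g x. apply dsum_ext; apply tens_ext; intros w; reflexivity.
  - intros [a b]. apply dsum_ext; apply tens_ext; intros w; reflexivity.
  - intros f. apply tens_ext. intros w. symmetry. apply surjective_pairing.
Defined.

Lemma Fproj_dsum G (P Q : ZGmod G) :
  F_projective G P -> F_projective G Q -> F_projective G (dsum P Q).
Proof.
  intros [N1 [s1 [p1 [Hs1 [Hp1 E1]]]]] [N2 [s2 [p2 [Hs2 [Hp2 E2]]]]].
  set (T := dsum (tens G N1 (Delta G)) (tens G N2 (Delta G))).
  set (e := tens_dsum_iso N1 N2 (Delta G)).
  apply (Fproj_retract G (tens G (dsum N1 N2) (Delta G)) (dsum P Q)
          (fun x : dsum P Q => isof e ((s1 (fst x), s2 (snd x)) : T))
          (fun y => let z := isog e y in (p1 (fst z), p2 (snd z)) : dsum P Q)).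
  - apply Fproj_tens.
  - apply (is_hom_comp G _ T); [apply is_hom_dsum; auto|apply isof_hom].
  - apply (is_hom_comp G _ T (dsum P Q) _ (fun z => (p1 (fst z), p2 (snd z)) : dsum P Q));
      [apply isog_hom|apply is_hom_dsum; auto].
  - intros [a b]. cbv beta zeta. unfold e. rewrite isogf. simpl. rewrite E1, E2. reflexivity.
Qed.

(** * Schanuel's lemma for F-surjections

   If  pi : A -> C  and  pi' : A' -> C'  are F-surjections from F-projectives
   and  C ~= C', lift both ways to  al : A -> A',  be : A' -> A  over the
   isomorphism; then  (a, k) |-> (al a + k, a - be (al a + k))  is an
   isomorphism  A + ker pi' ~= A' + ker pi  whose inverse is the symmetric map. *)

Section SchanuelMap.
Variables (G : Grp) (A A' C C' : ZGmod G) (pi : A -> C) (pi' : A' -> C')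
  (Hpi : is_hom G A C pi) (Hpi' : is_hom G A' C' pi')
  (u : C -> C') (v : C' -> C) (al : A -> A') (be : A' -> A).
Hypotheses (Hal : is_hom G A A' al) (Hbe : is_hom G A' A be)
  (Eal : forall a, pi' (al a) = u (pi a)) (Ebe : forall a, pi (be a) = v (pi' a))
  (Evu : forall c, v (u c) = c).

Lemma schanuel_ker (a : A) (k : kermod pi' Hpi') :
  pi (msub a (be (madd (al a) (proj1_sig k)))) = mzero.
Proof.
  destruct k as [k Hk]. simpl. destruct Hpi as [Pa _]. destruct Hpi' as [Pa' _].
  rewrite (addB _ _ _ pi Pa), Ebe, Pa', Eal, Hk, madd0, Evu. apply msubxx.
Qed.

Definition schanuel_map (x : dsum A (kermod pi' Hpi')) : dsum A' (kermod pi Hpi) :=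
  (madd (al (fst x)) (proj1_sig (snd x)),
   exist _ (msub (fst x) (be (madd (al (fst x)) (proj1_sig (snd x)))))
     (schanuel_ker (fst x) (snd x))).

Lemma schanuel_map_hom : is_hom G _ _ schanuel_map.
Proof.
  destruct Hal as [Aa Ag], Hbe as [Ba Bg].
  split.
  - intros [a1 [k1 H1]] [a2 [k2 H2]]. apply dsum_ext; simpl.
    + rewrite Aa. apply maddACA.
    + apply sig_eq'. simpl. rewrite Aa, (maddACA _ _ (al a1)), Ba. apply msub_add.
  - intros g [a [k H]]. apply dsum_ext; simpl.
    + rewrite Ag, mactD. reflexivity.
    + apply sig_eq'. simpl. rewrite Ag, <- mactD, Bg, mact_sub. reflexivity.
Qed.

End SchanuelMap.

Lemma schanuel_map_inv G (A A' C C' : ZGmod G) pi pi' Hpi Hpi' u v u' v' al be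
  Eal Ebe Evu Ebe' Eal' Evu' x :
  schanuel_map G A' A C' C pi' pi Hpi' Hpi u' v' be al Ebe' Eal' Evu'
    (schanuel_map G A A' C C' pi pi' Hpi Hpi' u v al be Eal Ebe Evu x) = x.
Proof.
  destruct x as [a [k H]].
  assert (E : madd (be (madd (al a) k)) (msub a (be (madd (al a) k))) = a).
  { rewrite maddC. apply madd_msubK. }
  apply dsum_ext; simpl; [rewrite E; reflexivity|].
  apply sig_eq'. simpl. rewrite E, maddC. apply msub_addK.
Qed.

Lemma schanuel G (A A' C C' : ZGmod G) (pi : A -> C) (pi' : A' -> C')
  (Hpi : is_hom G A C pi) (Hpi' : is_hom G A' C' pi') :
  F_surjective pi -> F_surjective pi' -> F_projective G A -> F_projective G A' -> iso C C' ->
  inhabited (iso (dsum A (kermod pi' Hpi')) (dsum A' (kermod pi Hpi))).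
Proof.
  intros Sp Sp' PA PA' psi.
  destruct (lifting G A A' C' pi' (fun a => isof psi (pi a)) PA Hpi' Sp') as [al [Hal Eal]].
  { apply is_hom_comp; auto. apply isof_hom. }
  destruct (lifting G A' A C pi (fun a => isog psi (pi' a)) PA' Hpi Sp) as [be [Hbe Ebe]].
  { apply is_hom_comp; auto. apply isog_hom. }
  constructor.
  refine (mk_iso _ _
    (schanuel_map G A A' C C' pi pi' Hpi Hpi' _ _ al be Eal Ebe (isogf G C C' psi))
    (schanuel_map G A' A C' C pi' pi Hpi' Hpi _ _ be al Ebe Eal (isofg G C C' psi)) _).
  split; [apply schanuel_map_hom; assumption|]. split; [apply schanuel_map_hom; assumption|].
  split; intros; apply schanuel_map_inv.
Qed.

Section Corestriction.
Variables (G : Grp) (A M : ZGmod G) (f : A -> M) (S : M -> Prop) (HS : is_submod S)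
  (Hf : forall x, S (f x)) (Hhom : is_hom G A M f).

Definition corestrict (x : A) : submod M S HS := exist _ (f x) (Hf x).

Lemma corestrict_hom : is_hom G A _ corestrict.
Proof. destruct Hhom as [Ha Hg]. split; intros; apply sig_eq'; [apply Ha|apply Hg]. Qed.

Lemma corestrict_ker x : corestrict x = mzero <-> f x = mzero.
Proof.
  split; intros E; [apply (f_equal (@proj1_sig _ _)) in E; exact E|apply sig_eq'; exact E].
Qed.

Lemma corestrict_F_surjective : (forall y, S y -> exists x, f x = y) ->
  F_split_sub A (fun x => f x = mzero) -> F_surjective corestrict.
Proof.
  intros Hsur [_ Hsplit] H HH. destruct (Hsplit H HH) as [r [Ra [Rg [Rk Rf]]]].
  apply section_of_retraction with (r := r); [apply corestrict_hom| |].
  - intros [y Hy]. destruct (Hsur y Hy) as [x Hx]. exists x. apply sig_eq'. exact Hx.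
  - split; [exact Ra|split; [exact Rg|split]].
    + intros x. apply corestrict_ker, Rk.
    + intros x Hx. apply Rf, corestrict_ker, Hx.
Qed.

Definition iso_ker_corestrict (Hc : is_hom G A _ corestrict) (K : A -> Prop) (HK : is_submod K)
  (E : forall x, f x = mzero <-> K x) : iso (kermod corestrict Hc) (submod A K HK).
Proof. apply iso_sub. intros x. rewrite corestrict_ker. apply E. Defined.

End Corestriction.

Definition dsum_map {G} {A C : ZGmod G} (X : ZGmod G) (pi : A -> C) (z : dsum A X) : dsum C X :=
  (pi (fst z), snd z).

Lemma dsum_map_hom G (A C X : ZGmod G) (pi : A -> C) :
  is_hom G A C pi -> is_hom G _ _ (dsum_map X pi).
Proof. intros H. exact (is_hom_dsum G A X C X pi (fun x => x) H (is_hom_id G X)). Qed.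

Lemma dsum_map_F_surjective G (A C X : ZGmod G) (pi : A -> C) :
  F_surjective pi -> F_surjective (dsum_map X pi).
Proof.
  intros S H HH. destruct (S H HH) as [s [Sa [Sg Ss]]].
  exists (fun y => (s (fst y), snd y) : dsum A X). split; [|split].
  - intros x y. simpl. rewrite Sa. reflexivity.
  - intros h x Hh. simpl. rewrite Sg; auto.
  - intros [c x]. unfold dsum_map. simpl. rewrite Ss. reflexivity.
Qed.

Lemma ker_dsum_map_pf G (A C X : ZGmod G) (pi : A -> C) (Hpi : is_hom G A C pi)
  (z : kermod (dsum_map X pi) (dsum_map_hom G A C X pi Hpi)) : pi (fst (proj1_sig z)) = mzero.
Proof. destruct z as [[a x] E]. simpl. unfold dsum_map in E. simpl in E. injection E. auto. Qed.

Definition iso_ker_dsum_map {G} (A C X : ZGmod G) (pi : A -> C) (Hpi : is_hom G A C pi) :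
  iso (kermod (dsum_map X pi) (dsum_map_hom G A C X pi Hpi)) (kermod pi Hpi).
Proof.
  set (K := kermod (dsum_map X pi) (dsum_map_hom G A C X pi Hpi)).
  assert (pf : forall k : kermod pi Hpi, dsum_map X pi ((proj1_sig k, mzero) : dsum A X) = mzero).
  { intros [k Hk]. unfold dsum_map. simpl. rewrite Hk. reflexivity. }
  refine (mk_iso K (kermod pi Hpi)
            (fun z : K => exist _ (fst (proj1_sig z)) (ker_dsum_map_pf G A C X pi Hpi z))
            (fun k => exist _ ((proj1_sig k, mzero) : dsum A X) (pf k) : K) _).
  repeat split; intros; apply sig_eq'; simpl; auto.
  - apply dsum_ext; simpl; auto. symmetry; apply madd0.
  - apply dsum_ext; simpl; auto. symmetry; apply mact0.
  - destruct x as [[a b] E]. simpl. unfold dsum_map in E. simpl in E. injection E.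
    intros -> _. reflexivity.
Defined.

(** * The bar resolution

   [bar G i] is  Z (x) Z[Delta]^(x)i  and [bar_cycles G i] the image of the
   previous differential (all of Z for i = 0).  Each stage is obtained from
   the previous one by [bar_map], so every [bar_cycles G i] is F-split and the
   resolution  ... -> B_2 -> B_1 -> B_0 = Z  is F-split with F-projective
   terms in positive degrees. *)

Definition F_split_stage (G : Grp) : Type := {M : ZGmod G & {Q : M -> Prop | F_split_sub M Q}}.

Lemma triv_F_split G : F_split_sub (trivZ G) (fun _ => True).
Proof.
  split; [split; auto|]. intros H _. exists (fun x => x).
  split; [|split; [|split]]; auto. intros x y. reflexivity.
Qed.

Fixpoint bar_stage (G : Grp) (i : nat) : F_split_stage G :=
  match i with
  | 0 => existT _ (trivZ G) (exist _ (fun _ => True) (triv_F_split G))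
  | S i => let s := bar_stage G i in
      existT _ (tens G (projT1 s) (Delta G))
        (exist _ (fun f => bar_map G _ _ (proj2_sig (projT2 s)) f = mzero)
           (bar_map_kernel_F_split G _ _ (proj2_sig (projT2 s))))
  end.

Definition bar (G : Grp) (i : nat) : ZGmod G := projT1 (bar_stage G i).
Definition bar_cycles (G : Grp) (i : nat) : bar G i -> Prop := proj1_sig (projT2 (bar_stage G i)).

Lemma bar_cycles_F_split G i : F_split_sub (bar G i) (bar_cycles G i).
Proof. exact (proj2_sig (projT2 (bar_stage G i))). Qed.

Definition bar_d (G : Grp) (i : nat) : bar G (S i) -> bar G i :=
  bar_map G (bar G i) (bar_cycles G i) (proj2_sig (projT2 (bar_stage G i))).

Lemma bar_d_hom G i : is_hom G (bar G (S i)) (bar G i) (bar_d G i).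
Proof. apply bar_map_hom. Qed.

Lemma bar_d_in G i f : bar_cycles G i (bar_d G i f).
Proof. exact (bar_map_in G _ _ _ f). Qed.

Lemma bar_d_onto G i y : bar_cycles G i y -> exists x, bar_d G i x = y.
Proof. intros Hy. destruct (Delta_pt G) as [w]. exists (delta w y). apply bar_map_delta, Hy. Qed.

Lemma bar_cycles_S G i f : bar_cycles G (S i) f = (bar_d G i f = mzero).
Proof. reflexivity. Qed.

Definition bar_Q (G : Grp) (i : nat) : ZGmod G :=
  submod (bar G i) (bar_cycles G i) (proj1 (bar_cycles_F_split G i)).

Definition bar_dc (G : Grp) (i : nat) : bar G (S i) -> bar_Q G i :=
  corestrict G _ _ (bar_d G i) _ _ (bar_d_in G i).

Lemma bar_dc_hom G i : is_hom G _ (bar_Q G i) (bar_dc G i).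
Proof. apply corestrict_hom, bar_d_hom. Qed.

Lemma bar_dc_F_surjective G i : F_surjective (bar_dc G i).
Proof.
  apply corestrict_F_surjective; [apply bar_d_hom|apply bar_d_onto|].
  apply (bar_cycles_F_split G (S i)).
Qed.

Lemma Fproj_bar G i : F_projective G (bar G (S i)).
Proof. apply Fproj_tens. Qed.

(** Given an F-split resolution  0 -> P_n -> ... -> P_0 -> Z -> 0  by
   F-projectives, Schanuel's lemma applied degree by degree to it and to the
   bar resolution shows that the i-th cycles of the two resolutions agree up
   to F-projective summands.  At i = n the cycles of P are  P_n  itself, so
   the n-th bar cycles are F-projective. *)

Definition F_resolution (G : Grp) (n : nat) (P : nat -> ZGmod G)
  (d : forall i, P (S i) -> P i) (eps : P 0 -> trivZ G) : Prop :=
  exact_resolution G (trivZ G) n P d eps /\ F_split G (trivZ G) n P d eps /\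
  forall i, i <= n -> F_projective G (P i).

(* the module receiving  P_i  (with  P_(-1) = Z), the map into it, and its cycles *)
Definition res_target (G : Grp) (P : nat -> ZGmod G) (i : nat) : ZGmod G :=
  match i with 0 => trivZ G | S j => P j end.

Definition res_d (G : Grp) (P : nat -> ZGmod G) (d : forall i, P (S i) -> P i)
  (eps : P 0 -> trivZ G) (i : nat) : P i -> res_target G P i :=
  match i as i0 return P i0 -> res_target G P i0 with
  | 0 => eps
  | S j => d j
  end.

Definition res_cycles (G : Grp) (P : nat -> ZGmod G) (d : forall i, P (S i) -> P i)
  (eps : P 0 -> trivZ G) (i : nat) : res_target G P i -> Prop :=
  match i as i0 return res_target G P i0 -> Prop with
  | 0 => fun _ => True
  | S j => in_ker G (trivZ G) P d eps j
  end.

Lemma in_ker_res_d G P d eps i x :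
  in_ker G (trivZ G) P d eps i x <-> res_d G P d eps i x = mzero.
Proof. destruct i; simpl; tauto. Qed.

Section Comparison.
Variables (G : Grp) (n : nat) (P : nat -> ZGmod G) (d : forall i, P (S i) -> P i)
  (eps : P 0 -> trivZ G) (R : F_resolution G n P d eps).

Lemma res_d_hom i : i <= n -> is_hom G _ _ (res_d G P d eps i).
Proof. destruct R as [[He [Hd _]] _]. intros Hi. destruct i; simpl; [auto|apply Hd; lia]. Qed.

Lemma res_cycles_submod i : i <= n -> is_submod (res_cycles G P d eps i).
Proof.
  intros Hi. destruct i as [|i]; [split; simpl; auto|].
  pose proof (ker_submod G _ _ _ (res_d_hom i ltac:(lia))) as [K0 KA KN KG].
  split; intros; apply in_ker_res_d.
  - auto.
  - apply KA; apply in_ker_res_d; auto.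
  - apply KN; apply in_ker_res_d; auto.
  - apply KG; apply in_ker_res_d; auto.
Qed.

Lemma res_d_in i : i <= n -> forall x, res_cycles G P d eps i (res_d G P d eps i x).
Proof.
  destruct R as [[_ [_ [_ [H0 [Hdd _]]]]] _]. intros Hi x.
  destruct i as [|[|j]]; simpl; [auto|apply H0; lia|apply Hdd; lia].
Qed.

Lemma res_d_onto i : i <= n ->
  forall y, res_cycles G P d eps i y -> exists x, res_d G P d eps i x = y.
Proof.
  destruct R as [[_ [_ [Hs [_ [_ [Hex _]]]]]] _]. intros Hi y Hy.
  destruct i; simpl in *; [apply Hs|apply Hex; [lia|exact Hy]].
Qed.

Definition res_image (i : nat) (Hi : i <= n) : ZGmod G :=
  submod (res_target G P i) (res_cycles G P d eps i) (res_cycles_submod i Hi).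

Definition res_dc (i : nat) (Hi : i <= n) : P i -> res_image i Hi :=
  corestrict G _ _ (res_d G P d eps i) _ _ (res_d_in i Hi).

Lemma res_dc_hom i Hi : is_hom G _ _ (res_dc i Hi).
Proof. apply corestrict_hom, res_d_hom, Hi. Qed.

Lemma res_dc_F_surjective i Hi : F_surjective (res_dc i Hi).
Proof.
  apply corestrict_F_surjective; [apply res_d_hom, Hi|apply res_d_onto, Hi|].
  destruct R as [_ [Hsplit _]]. split; [apply ker_submod, res_d_hom, Hi|].
  intros H HH. destruct (Hsplit i Hi H HH) as [r [Ra [Rg [Rk Rf]]]].
  exists r. split; [exact Ra|split; [exact Rg|split]].
  - intros x. apply in_ker_res_d, Rk.
  - intros x Hx. apply Rf, in_ker_res_d, Hx.
Qed.

Lemma cycles_stably_iso : forall i (Hi : i <= n), exists X Y,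
  F_projective G X /\ F_projective G Y /\
  inhabited (iso (dsum (bar_Q G i) X) (dsum (res_image i Hi) Y)).
Proof.
  induction i; intros Hi.
  - exists (zmod G), (zmod G). split; [apply Fproj_zero|]. split; [apply Fproj_zero|].
    constructor. apply iso_dsum; [|apply iso_refl]. apply iso_sub. intros x. simpl. tauto.
  - assert (Hi0 : i <= n) by lia.
    destruct (IHi Hi0) as [X [Y [PX [PY [psi]]]]].
    (* Schanuel for  B_(i+1) + X -> Q_i + X  and  P_i + Y -> L_i + Y *)
    set (A := dsum (bar G (S i)) X). set (A' := dsum (P i) Y).
    pose (Hpi := dsum_map_hom G _ _ X _ (bar_dc_hom G i)).
    pose (Hpi' := dsum_map_hom G _ _ Y _ (res_dc_hom i Hi0)).
    assert (PA : F_projective G A) by (apply Fproj_dsum; auto; apply Fproj_bar).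
    assert (PA' : F_projective G A').
    { apply Fproj_dsum; auto. apply (proj2 (proj2 R)). lia. }
    destruct (schanuel G A A' _ _ _ _ Hpi Hpi') as [chi]; auto.
    { apply dsum_map_F_surjective, bar_dc_F_surjective. }
    { apply dsum_map_F_surjective, res_dc_F_surjective. }
    assert (k1 : iso (kermod _ Hpi) (bar_Q G (S i))).
    { refine (iso_trans _ _ _ (iso_ker_dsum_map _ _ _ _ _) _).
      apply iso_ker_corestrict. intros x. rewrite bar_cycles_S. tauto. }
    assert (k2 : iso (kermod _ Hpi') (res_image (S i) Hi)).
    { refine (iso_trans _ _ _ (iso_ker_dsum_map _ _ _ _ _) _).
      apply iso_ker_corestrict. intros x. rewrite <- in_ker_res_d. simpl. tauto. }
    exists A', A. split; [exact PA'|]. split; [exact PA|]. constructor.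
    refine (iso_trans _ _ _ (iso_swap _ _) (iso_trans _ _ _ _ (iso_swap _ _))).
    refine (iso_trans _ _ _ (iso_dsum _ _ _ _ (iso_refl A') (iso_sym _ _ k1)) _).
    refine (iso_trans _ _ _ (iso_sym _ _ chi) _).
    exact (iso_dsum _ _ _ _ (iso_refl A) k2).
Qed.

(* The top cycle module L_n is isomorphic to P_n, hence F-projective. *)
Lemma Fproj_top_cycles : F_projective G (res_image n (le_n n)).
Proof.
  destruct R as [[_ [_ [_ [_ [_ [_ Htop]]]]]] [_ HP]].
  destruct (bij_iso G _ _ (res_dc n (le_n n))) as [i].
  - apply res_dc_hom.
  - intros x Hx. apply Htop, in_ker_res_d, (corestrict_ker G _ _ _ _ (res_cycles_submod n (le_n n)) (res_d_in n (le_n n)) x), Hx.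
  - apply F_surjective_surj, res_dc_F_surjective.
  - apply (Fproj_iso G _ _ i), HP, le_n.
Qed.

Lemma Fproj_bar_cycles : F_projective G (bar_Q G n).
Proof.
  destruct (cycles_stably_iso n (le_n n)) as [X [Y [PX [PY [psi]]]]].
  apply (Fproj_dsum_l G _ X), (Fproj_iso G _ _ (iso_sym _ _ psi)), Fproj_dsum;
    [apply Fproj_top_cycles|exact PY].
Qed.

End Comparison.

(** * The Eilenberg swindle

   Let  bet : X -> B  and let [e] be an idempotent G-endomorphism of [X] with
   bet o e = bet  and  ker bet  contained in  ker e  (e.g. e = s o bet for a
   G-section [s] of bet onto its image).  On  F = X (x) Z[N] = X^(N)  put
     swindle y = (bet y_0, (e y_(j+1) + (1 - e) y_j)_j)  :  F -> B + F.
   This is injective with image  bet(X) + F: writing  X = eX + (1-e)X,  the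
   countable sum absorbs the complement  (1-e)X = ker bet  by shifting. *)

Definition NatG (G : Grp) : GSet G.
Proof. refine {| scar := nat; sact := fun _ j => j |}; auto. Defined.

Section Swindle.
Variables (G : Grp) (B X : ZGmod G) (bet : X -> B) (e : X -> X).
Hypotheses (Hbet : is_hom G X B bet) (He : is_hom G X X e) (e_idem : forall x, e (e x) = e x)
  (bet_e : forall x, bet (e x) = bet x) (ker_bet_e : forall x, bet x = mzero -> e x = mzero).

Definition co_e (x : X) : X := msub x (e x).

Lemma co_e_additive : additive co_e.
Proof. intros x y. unfold co_e. rewrite (proj1 He). apply msub_add. Qed.

Lemma co_e_act g x : co_e (mact g x) = mact g (co_e x).
Proof. unfold co_e. rewrite (proj2 He), mact_sub. reflexivity. Qed.

Lemma e_co_e_decomp x : madd (e x) (co_e x) = x.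
Proof. unfold co_e. rewrite maddC. apply madd_msubK. Qed.

Lemma e_co_e x : e (co_e x) = mzero.
Proof. unfold co_e. rewrite (addB _ _ _ e (proj1 He)), e_idem. apply msubxx. Qed.

Lemma co_e_e x : co_e (e x) = mzero.
Proof. unfold co_e. rewrite e_idem. apply msubxx. Qed.

Lemma co_e_idem x : co_e (co_e x) = co_e x.
Proof. unfold co_e at 1. rewrite e_co_e. apply msub0. Qed.

Lemma co_e0 : co_e mzero = mzero.
Proof. apply add0, co_e_additive. Qed.

Lemma shift_pf (y : tens G X (NatG G)) :
  finsupp G X (NatG G) (fun j => madd (e (tval y (S j))) (co_e (tval y j))).
Proof.
  destruct y as [y [l Hl]]. exists (map pred l ++ l). intros j Hj. apply in_or_app. simpl in *.
  destruct (classic (y j = mzero)) as [E|E].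
  - left. assert (E' : y (S j) <> mzero).
    { intros E'. apply Hj. rewrite E, E', (hom0 _ _ _ e He), co_e0, madd0. reflexivity. }
    change j with (pred (S j)). apply in_map, Hl, E'.
  - right. apply Hl, E.
Qed.

Definition swindle (y : tens G X (NatG G)) : dsum B (tens G X (NatG G)) :=
  (bet (tval y 0), exist _ _ (shift_pf y)).

Lemma swindle_hom : is_hom G _ _ swindle.
Proof.
  destruct Hbet as [Ba Bg]. destruct He as [Ea Eg]. split.
  - intros y1 y2. apply dsum_ext; simpl; [apply Ba|].
    apply tens_ext. intros j. simpl. rewrite Ea, co_e_additive. apply maddACA.
  - intros g y. apply dsum_ext; simpl; [apply Bg|].
    apply tens_ext. intros j. simpl. rewrite Eg, co_e_act, mactD. reflexivity.
Qed.

Lemma swindle_inj y : swindle y = mzero -> y = mzero.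
Proof.
  intros Hy. destruct He as [Ea _].
  assert (H0 : bet (tval y 0) = mzero) by (apply (f_equal fst) in Hy; exact Hy).
  assert (H1 : forall j, madd (e (tval y (S j))) (co_e (tval y j)) = mzero).
  { intros j. apply (f_equal snd) in Hy.
    apply (f_equal (fun f : tens G X (NatG G) => tval f j)) in Hy. exact Hy. }
  (* applying e and 1 - e to H1 kills the two summands separately *)
  assert (He1 : forall j, e (tval y (S j)) = mzero).
  { intros j. specialize (H1 j). apply (f_equal e) in H1.
    rewrite Ea, e_idem, e_co_e, madd0, (add0 _ _ _ e Ea) in H1. exact H1. }
  assert (Hc : forall j, co_e (tval y j) = mzero).
  { intros j. specialize (H1 j). apply (f_equal co_e) in H1.
    rewrite co_e_additive, co_e_e, madd0l, co_e_idem, co_e0 in H1. exact H1. }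
  apply tens_ext. intros j. change (tval y j = mzero).
  rewrite <- (e_co_e_decomp (tval y j)), Hc, madd0.
  destruct j as [|j]; [apply ker_bet_e, H0|apply He1].
Qed.

Lemma swindle_onto x (z : tens G X (NatG G)) : e x = x ->
  exists y, swindle y = (bet x, z).
Proof.
  intros Exe. destruct He as [Ea _].
  set (yf := fun j => match j with
                      | 0 => madd x (co_e (tval z 0))
                      | S j' => madd (e (tval z j')) (co_e (tval z (S j'))) end).
  assert (pf : finsupp G X (NatG G) yf).
  { destruct z as [z [l Hl]]. exists (0 :: l ++ map S l). intros j Hj.
    destruct j as [|j]; [left; auto|right]. apply in_or_app.
    destruct (classic (z j = mzero)) as [E|E].
    - left. apply Hl. intros E'. apply Hj. unfold yf. simpl. rewrite E, E'.
      rewrite (add0 _ _ _ e Ea), co_e0, madd0. reflexivity.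
    - right. apply in_map, Hl, E. }
  exists (exist _ yf pf).
  assert (Ecx : co_e x = mzero) by (unfold co_e; rewrite Exe; apply msubxx).
  apply dsum_ext; simpl.
  - rewrite (proj1 Hbet). unfold co_e. rewrite (addB _ _ _ bet (proj1 Hbet)), bet_e, msubxx, madd0.
    reflexivity.
  - apply tens_ext. intros j. simpl.
    destruct j as [|j]; simpl;
      rewrite Ea, e_idem, e_co_e, madd0, co_e_additive, ?Ecx, ?co_e_e, madd0l, co_e_idem;
      apply e_co_e_decomp.
Qed.

End Swindle.

(** [resolves M Qm n P d eps] says that  0 -> P_n -> ... -> P_0 -> Qm -> 0  is
   an F-split exact sequence, where  Qm  is a submodule of [M] containing the
   image of [eps]; for  Qm = M  this is [exact_resolution] plus [F_split]. *)

Definition resolves (G : Grp) (M : ZGmod G) (Qm : M -> Prop) (n : nat) (P : nat -> ZGmod G)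
  (d : forall i, P (S i) -> P i) (eps : P 0 -> M) : Prop :=
  is_hom G (P 0) M eps /\ (forall j, j < n -> is_hom G (P (S j)) (P j) (d j)) /\
  (forall x, Qm (eps x)) /\ (forall y, Qm y -> exists x, eps x = y) /\
  (0 < n -> forall y : P 1, eps (d 0 y) = mzero) /\
  (forall j, S (S j) <= n -> forall y : P (S (S j)), d j (d (S j) y) = mzero) /\
  (forall i, i < n -> forall x : P i, in_ker G M P d eps i x -> exists y, d i y = x) /\
  (forall x : P n, in_ker G M P d eps n x -> x = mzero) /\
  F_split G M n P d eps.

(** If  B_(k+2) -> Q_(k+1)  has a G-section [s], the swindle with  e = s o d
   gives the F-split resolution of length one
     0 -> F -> B_(k+1) + F -> Q_k -> 0,   F = B_(k+2) (x) Z[N]. *)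

Definition is_cycle_section (G : Grp) (k : nat) (s : bar_Q G (S k) -> bar G (S (S k))) : Prop :=
  is_hom G _ _ s /\ forall q, bar_dc G (S k) (s q) = q.

(* a G-section chosen once and for all when one exists (the zero map otherwise) *)
Definition chosen_section (G : Grp) (k : nat) : bar_Q G (S k) -> bar G (S (S k)) :=
  match excluded_middle_informative (exists s, is_cycle_section G k s) with
  | left e => proj1_sig (cid e)
  | right _ => fun _ => mzero
  end.

Lemma chosen_section_hom G k : is_hom G _ _ (chosen_section G k).
Proof.
  unfold chosen_section. destruct (excluded_middle_informative _) as [e|].
  - exact (proj1 (proj2_sig (cid e))).
  - split; intros; symmetry; [apply madd0|apply mact0].
Qed.

Lemma chosen_section_spec G k :
  (exists s, is_cycle_section G k s) -> is_cycle_section G k (chosen_section G k).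
Proof.
  intros H. unfold chosen_section. destruct (excluded_middle_informative _) as [e|n].
  - exact (proj2_sig (cid e)).
  - contradiction.
Qed.

Definition swindle_idem (G : Grp) (k : nat) (x : bar G (S (S k))) : bar G (S (S k)) :=
  chosen_section G k (bar_dc G (S k) x).

Lemma swindle_idem_hom G k : is_hom G _ _ (swindle_idem G k).
Proof. apply (is_hom_comp G _ (bar_Q G (S k))); [apply bar_dc_hom|apply chosen_section_hom]. Qed.

Definition free_part (G : Grp) (k : nat) : ZGmod G := tens G (bar G (S (S k))) (NatG G).

Definition top_mods (G : Grp) (k i : nat) : ZGmod G :=
  match i with 0 => dsum (bar G (S k)) (free_part G k) | S _ => free_part G k end.

Definition top_diff (G : Grp) (k i : nat) : top_mods G k (S i) -> top_mods G k i :=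
  match i as i0 return top_mods G k (S i0) -> top_mods G k i0 with
  | 0 => swindle G _ _ (bar_d G (S k)) (swindle_idem G k) (swindle_idem_hom G k)
  | S _ => fun _ => mzero
  end.

Definition top_aug (G : Grp) (k : nat) (z : top_mods G k 0) : bar G k := bar_d G k (fst z).

Section Top.
Variables (G : Grp) (k : nat).
Hypothesis has_section : exists s, is_cycle_section G k s.

Lemma swindle_hypotheses :
  (forall x, swindle_idem G k (swindle_idem G k x) = swindle_idem G k x) /\
  (forall x, bar_d G (S k) (swindle_idem G k x) = bar_d G (S k) x) /\
  (forall x, bar_d G (S k) x = mzero -> swindle_idem G k x = mzero).
Proof.
  destruct (chosen_section_spec G k has_section) as [Hs Ss].
  assert (Hd : forall q, bar_d G (S k) (chosen_section G k q) = proj1_sig q).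
  { intros q. exact (f_equal (@proj1_sig _ _) (Ss q)). }
  unfold swindle_idem. split; [|split].
  - intros x. rewrite Ss. reflexivity.
  - intros x. rewrite Hd. reflexivity.
  - intros x Hx. replace (bar_dc G (S k) x) with (@mzero G (bar_Q G (S k))).
    + apply (hom0 _ _ _ _ Hs).
    + symmetry. apply corestrict_ker, Hx.
Qed.

Lemma top_resolves : resolves G (bar G k) (bar_cycles G k) 1 (top_mods G k) (top_diff G k) (top_aug G k).
Proof.
  destruct swindle_hypotheses as [Hidem [Hbe Hker]].
  pose proof (swindle_hom G _ _ _ _ (bar_d_hom G (S k)) (swindle_idem_hom G k)) as Dh.
  pose proof (swindle_inj G _ _ _ _ (swindle_idem_hom G k) Hidem Hker) as Di.
  destruct (bar_d_hom G k) as [Ba Bg].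
  split; [|split; [|split; [|split; [|split; [|split; [|split; [|split]]]]]]].
  - split; intros; unfold top_aug; [exact (Ba _ _) | exact (Bg _ _)].
  - intros j Hj. assert (j = 0) by lia. subst. exact Dh.
  - intros x. apply bar_d_in.
  - intros y Hy. destruct (Delta_pt G) as [w].
    exists ((delta w y, mzero) : top_mods G k 0). apply bar_map_delta, Hy.
  - intros _ y. exact (bar_d_in G (S k) _).
  - intros j Hj. lia.
  - intros i Hi x Hx. assert (i = 0) by lia. subst. destruct x as [b z]. simpl in Hx.
    (* b is a cycle, hence b = d x with e x = x *)
    destruct (chosen_section_spec G k has_section) as [_ Ss].
    set (q := exist _ b Hx : bar_Q G (S k)).
    destruct (swindle_onto G _ _ _ _ (bar_d_hom G (S k)) (swindle_idem_hom G k) Hidem Hbe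
               (chosen_section G k q) z) as [y Hy].
    + unfold swindle_idem. rewrite Ss. reflexivity.
    + exists y. simpl. rewrite Hy. f_equal. exact (f_equal (@proj1_sig _ _) (Ss q)).
  - intros x Hx. apply Di. exact Hx.
  - intros i Hi H HH. destruct i as [|[|i]]; [| |lia].
    + destruct (proj2 (bar_cycles_F_split G (S k)) H HH) as [r [Ra [Rg [Rk Rf]]]].
      exists (fun z => (r (fst z), snd z) : top_mods G k 0). split; [|split; [|split]].
      * intros x y. apply dsum_ext; [exact (Ra _ _) | reflexivity].
      * intros h x Hh. apply dsum_ext; [exact (Rg _ _ Hh) | reflexivity].
      * intros x. exact (Rk (fst x)).
      * intros [b z] Hx. apply dsum_ext; [exact (Rf b Hx) | reflexivity].
    + exists (fun _ => mzero). split; [|split; [|split]].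
      * intros x y. symmetry. apply madd0.
      * intros h x _. symmetry. apply mact0.
      * intros x. exact (hom0 _ _ _ _ Dh).
      * intros x Hx. symmetry. apply Di. exact Hx.
Qed.

End Top.

(** If  bet : A -> M  maps onto  Qm  with F-split kernel, an F-split
   resolution of  ker bet  extends by [bet] to one of  Qm.  Starting from
   the top resolution of  Q_(k+m)  and splicing on  B_(k+m), ..., B_(k+1)
   gives a resolution of  Q_k  of length  m + 1. *)

Definition cons_mods {G} (A : ZGmod G) (P : nat -> ZGmod G) (i : nat) : ZGmod G :=
  match i with 0 => A | S i' => P i' end.

Definition cons_diff {G} (A : ZGmod G) (P : nat -> ZGmod G) (eps : P 0 -> A)
  (d : forall i, P (S i) -> P i) : forall i, cons_mods A P (S i) -> cons_mods A P i :=
  fun i => match i as i0 return cons_mods A P (S i0) -> cons_mods A P i0 with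
           | 0 => eps
           | S i' => d i'
           end.

Lemma in_ker_cons G (M A : ZGmod G) (P : nat -> ZGmod G) d eps (bet : A -> M) i x :
  in_ker G M (cons_mods A P) (cons_diff A P eps d) bet (S i) x <-> in_ker G A P d eps i x.
Proof. destruct i; simpl; tauto. Qed.

Lemma resolves_cons G (M A : ZGmod G) (Qm : M -> Prop) (bet : A -> M) n P d eps :
  is_hom G A M bet -> (forall x, Qm (bet x)) -> (forall y, Qm y -> exists x, bet x = y) ->
  F_split_sub A (fun x => bet x = mzero) ->
  resolves G A (fun x => bet x = mzero) n P d eps ->
  resolves G M Qm (S n) (cons_mods A P) (cons_diff A P eps d) bet.
Proof.
  intros Hb HbQ Hbs [_ Hbr] [E1 [E2 [E3 [E4 [E5 [E6 [E7 [E8 E9]]]]]]]].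
  split; [|split; [|split; [|split; [|split; [|split; [|split; [|split]]]]]]].
  - exact Hb.
  - intros [|j] Hj; simpl; [exact E1|apply E2; lia].
  - exact HbQ.
  - exact Hbs.
  - intros _ y. apply E3.
  - intros [|j] Hj y; simpl; [apply E5|apply E6]; lia.
  - intros [|i] Hi x Hx.
    + apply E4. exact Hx.
    + apply in_ker_cons, E7 in Hx; [|lia]. destruct Hx as [y Hy]. exists y. exact Hy.
  - intros x Hx. apply E8, (in_ker_cons G M A P d eps bet n x), Hx.
  - intros [|i] Hi H HH.
    + exact (Hbr H HH).
    + destruct (E9 i ltac:(lia) H HH) as [r [Ra [Rg [Rk Rf]]]]. exists r.
      split; [exact Ra|split; [exact Rg|split]].
      * intros x. apply in_ker_cons, Rk.
      * intros x Hx. apply Rf, (in_ker_cons G M A P d eps bet i), Hx.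
Qed.

(* the resolution of Q_k of length m + 1:
     B_(k+1), ..., B_(k+m), B_(k+m+1) + F, F   with  F = free_part G (k + m) *)
Fixpoint res_mods (G : Grp) (k m : nat) : nat -> ZGmod G :=
  match m with
  | 0 => top_mods G k
  | S m' => cons_mods (bar G (S k)) (res_mods G (S k) m')
  end.

Definition res_aug (G : Grp) (k m : nat) : res_mods G k m 0 -> bar G k :=
  match m as m0 return res_mods G k m0 0 -> bar G k with
  | 0 => top_aug G k
  | S m' => bar_d G k
  end.

Fixpoint res_diff (G : Grp) (k m : nat) : forall i, res_mods G k m (S i) -> res_mods G k m i :=
  match m as m0 return forall i, res_mods G k m0 (S i) -> res_mods G k m0 i with
  | 0 => top_diff G k
  | S m' => cons_diff (bar G (S k)) (res_mods G (S k) m') (res_aug G (S k) m') (res_diff G (S k) m')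
  end.

Lemma res_resolves G : forall m k, (exists s, is_cycle_section G (k + m) s) ->
  resolves G (bar G k) (bar_cycles G k) (S m) (res_mods G k m) (res_diff G k m) (res_aug G k m).
Proof.
  induction m; intros k Hs.
  - rewrite Nat.add_0_r in Hs. exact (top_resolves G k Hs).
  - apply resolves_cons.
    + apply bar_d_hom.
    + apply bar_d_in.
    + apply bar_d_onto.
    + apply (bar_cycles_F_split G (S k)).
    + apply (IHm (S k)). rewrite Nat.add_succ_r in Hs. exact Hs.
Qed.

(** * Identification with permutation modules

   Every module built so far is a permutation module on a G-set with finite
   stabilisers:  B_j = Z[Delta^j]  (product of copies of Delta), and
   F = B_(k+2) (x) Z[N] = Z[Delta^(k+2) x N]  (N with trivial action), since
   Z[A] (x) Z[O] = Z[A x O]  and  Z[A] + Z[B] = Z[A + B]. *)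

Definition point_set (G : Grp) : GSet G.
Proof. refine {| scar := unit; sact := fun _ u => u |}; auto. Defined.

Definition prod_set {G} (A B : GSet G) : GSet G.
Proof.
  refine {| scar := (scar A * scar B)%type; sact := fun g x => (sact g (fst x), sact g (snd x)) |}.
  - intros [a b]. simpl. rewrite !sact1. reflexivity.
  - intros g h [a b]. simpl. rewrite !sactM. reflexivity.
Defined.

Definition sum_set {G} (A B : GSet G) : GSet G.
Proof.
  refine {| scar := (scar A + scar B)%type;
            sact := fun g x => match x with inl a => inl (sact g a) | inr b => inr (sact g b) end |}.
  - intros [a|b]; rewrite sact1; reflexivity.
  - intros g h [a|b]; rewrite sactM; reflexivity.
Defined.

Fixpoint Delta_pow (G : Grp) (j : nat) : GSet G :=
  match j with 0 => point_set G | S j' => prod_set (Delta_pow G j') (Delta G) end.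

Lemma triv_perm_pf G (z : trivZ G) : finsupp G (trivZ G) (point_set G) (fun _ => z).
Proof. exists [tt]. intros [] _. left; auto. Qed.

Definition triv_perm_iso (G : Grp) : iso (trivZ G) (perm_mod G (point_set G)).
Proof.
  refine (mk_iso (trivZ G) (perm_mod G (point_set G))
    (fun z => exist _ _ (triv_perm_pf G z) : perm_mod G (point_set G))
    (fun f : perm_mod G (point_set G) => tval f tt) _).
  split; [split|split; [split|split]]; intros;
    try (apply tens_ext; intros []; reflexivity); reflexivity.
Defined.

Lemma tens_map_pf G (M N : ZGmod G) (O : GSet G) (f : M -> N) (Hf : f mzero = mzero)
  (x : tens G M O) : finsupp G N O (fun w => f (tval x w)).
Proof.
  destruct x as [x [l H]]. exists l. intros w Hw. apply H. intros E. apply Hw. simpl. rewrite E. auto.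
Qed.

Definition tens_map {G} {M N : ZGmod G} (O : GSet G) (f : M -> N) (Hf : f mzero = mzero)
  (x : tens G M O) : tens G N O := exist _ _ (tens_map_pf G M N O f Hf x).

Lemma tens_map_hom G (M N : ZGmod G) (O : GSet G) f Hf :
  is_hom G M N f -> is_hom G _ _ (@tens_map G M N O f Hf).
Proof. intros [Ha Hg]. split; intros; apply tens_ext; intros w; simpl; auto. Qed.

Definition tens_iso {G} (M N : ZGmod G) (O : GSet G) (i : iso M N) : iso (tens G M O) (tens G N O).
Proof.
  refine (mk_iso (tens G M O) (tens G N O)
            (tens_map O (isof i) (hom0 G M N _ (isof_hom G M N i)))
            (tens_map O (isog i) (hom0 G N M _ (isog_hom G M N i))) _).
  split; [apply tens_map_hom, isof_hom|]. split; [apply tens_map_hom, isog_hom|].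
  split; intros; apply tens_ext; intros w; simpl; [apply isogf|apply isofg].
Defined.

Lemma curry_pf G (A O : GSet G) (F : tens G (perm_mod G A) O) :
  finsupp G (trivZ G) (prod_set A O) (fun p => tval (tval F (snd p)) (fst p)).
Proof.
  destruct F as [F [lO HO]]. simpl.
  assert (K : forall l : list O, exists L, forall o a, In o l -> tval (F o) a <> mzero -> In (a, o) L).
  { induction l as [|o l IH].
    - exists []. intros o a [].
    - destruct IH as [L HL]. destruct (F o) as [fo [la Hla]] eqn:Eo.
      exists (map (fun a => (a, o)) la ++ L). intros o' a [E|I] Ha; apply in_or_app.
      + subst o'. left. rewrite Eo in Ha. simpl in Ha. apply (in_map (fun a => (a, o))), Hla, Ha.
      + right. auto. }
  destruct (K lO) as [L HL]. exists L. intros [a o] H. simpl in *. apply HL; auto.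
  apply HO. intros E. apply H. rewrite E. reflexivity.
Qed.

Lemma uncurry_pf1 G (A O : GSet G) (g : perm_mod G (prod_set A O)) (o : O) :
  finsupp G (trivZ G) A (fun a => tval g ((a, o) : prod_set A O)).
Proof.
  destruct g as [g [L HL]]. exists (map fst L). intros a Ha. simpl in *.
  apply (in_map fst L (a, o)), HL, Ha.
Qed.

Lemma uncurry_pf2 G (A O : GSet G) (g : perm_mod G (prod_set A O)) :
  finsupp G (perm_mod G A) O (fun o => exist _ _ (uncurry_pf1 G A O g o)).
Proof.
  destruct g as [g0 [L HL]] eqn:Eg. exists (map snd L). intros o Ho.
  destruct (classic (exists a, g0 (a, o) <> mzero)) as [[a Ha]|Hn].
  - apply (in_map snd L (a, o)), HL, Ha.
  - exfalso. apply Ho. apply tens_ext. intros a. simpl.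
    destruct (classic (g0 (a, o) = mzero)) as [E|E]; auto. exfalso. apply Hn. exists a. auto.
Qed.

Definition curry_iso {G} (A O : GSet G) : iso (tens G (perm_mod G A) O) (perm_mod G (prod_set A O)).
Proof.
  refine (mk_iso (tens G (perm_mod G A) O) (perm_mod G (prod_set A O))
            (fun F => exist _ _ (curry_pf G A O F) : perm_mod G (prod_set A O))
            (fun g => exist _ _ (uncurry_pf2 G A O g) : tens G (perm_mod G A) O) _).
  split; [split|split; [split|split]]; intros; try (apply tens_ext; intros [a o]; reflexivity);
    apply tens_ext; intros o; apply tens_ext; intros a; reflexivity.
Defined.

Lemma union_pf G (A B : GSet G) (f : perm_mod G A) (g : perm_mod G B) :
  finsupp G (trivZ G) (sum_set A B)
    (fun x : sum_set A B => match x with inl a => tval f a | inr b => tval g b end).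
Proof.
  destruct f as [f [l1 H1]], g as [g [l2 H2]]. exists (map inl l1 ++ map inr l2).
  intros [a|b] H; apply in_or_app; [left|right]; apply in_map; simpl in *; auto.
Qed.

Lemma unionl_pf G (A B : GSet G) (h : perm_mod G (sum_set A B)) :
  finsupp G (trivZ G) A (fun a => tval h (inl a : sum_set A B)).
Proof.
  destruct h as [h [l H]].
  exists (flat_map (fun x : sum_set A B => match x with inl a => [a] | inr _ => [] end) l).
  intros a Ha. apply in_flat_map. exists (inl a). split; [apply H, Ha|left; auto].
Qed.

Lemma unionr_pf G (A B : GSet G) (h : perm_mod G (sum_set A B)) :
  finsupp G (trivZ G) B (fun b => tval h (inr b : sum_set A B)).
Proof.
  destruct h as [h [l H]].
  exists (flat_map (fun x : sum_set A B => match x with inl _ => [] | inr b => [b] end) l).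
  intros b Hb. apply in_flat_map. exists (inr b). split; [apply H, Hb|left; auto].
Qed.

Definition union_iso {G} (A B : GSet G) :
  iso (dsum (perm_mod G A) (perm_mod G B)) (perm_mod G (sum_set A B)).
Proof.
  refine (mk_iso (dsum (perm_mod G A) (perm_mod G B)) (perm_mod G (sum_set A B))
            (fun x => exist _ _ (union_pf G A B (fst x) (snd x)) : perm_mod G (sum_set A B))
            (fun h => (exist _ _ (unionl_pf G A B h), exist _ _ (unionr_pf G A B h))
                      : dsum (perm_mod G A) (perm_mod G B)) _).
  split; [split|split; [split|split]]; intros;
    solve [apply tens_ext; intros [a|b]; reflexivity
          |apply dsum_ext; apply tens_ext; intros a; reflexivity].
Defined.

Fixpoint bar_perm_iso (G : Grp) (j : nat) : iso (bar G j) (perm_mod G (Delta_pow G j)) :=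
  match j as j0 return iso (bar G j0) (perm_mod G (Delta_pow G j0)) with
  | 0 => triv_perm_iso G
  | S j' => iso_trans _ _ _ (tens_iso _ _ (Delta G) (bar_perm_iso G j'))
             (curry_iso (Delta_pow G j') (Delta G))
  end.

Definition free_set (G : Grp) (k : nat) : GSet G := prod_set (Delta_pow G (S (S k))) (NatG G).

Definition top_sets (G : Grp) (k i : nat) : GSet G :=
  match i with
  | 0 => sum_set (Delta_pow G (S k)) (free_set G k)
  | S _ => free_set G k
  end.

Definition cons_sets {G} (A : GSet G) (F : nat -> GSet G) (i : nat) : GSet G :=
  match i with 0 => A | S i' => F i' end.

Fixpoint res_sets (G : Grp) (k m : nat) : nat -> GSet G :=
  match m with
  | 0 => top_sets G k
  | S m' => cons_sets (Delta_pow G (S k)) (res_sets G (S k) m')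
  end.

Definition free_part_iso (G : Grp) (k : nat) : iso (free_part G k) (perm_mod G (free_set G k)) :=
  iso_trans _ _ _ (tens_iso _ _ (NatG G) (bar_perm_iso G (S (S k))))
    (curry_iso (Delta_pow G (S (S k))) (NatG G)).

Definition top_perm_iso (G : Grp) (k : nat) : iso (top_mods G k 0) (perm_mod G (top_sets G k 0)) :=
  iso_trans _ _ _ (iso_dsum _ _ _ _ (bar_perm_iso G (S k)) (free_part_iso G k))
    (union_iso (Delta_pow G (S k)) (free_set G k)).

Fixpoint res_perm_iso (G : Grp) (k m : nat) :
  forall i, iso (res_mods G k m i) (perm_mod G (res_sets G k m i)) :=
  match m as m0 return forall i, iso (res_mods G k m0 i) (perm_mod G (res_sets G k m0 i)) with
  | 0 => fun i => match i as i0 return iso (top_mods G k i0) (perm_mod G (top_sets G k i0)) with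
                  | 0 => top_perm_iso G k
                  | S _ => free_part_iso G k
                  end
  | S m' => fun i => match i as i0 return iso (cons_mods (bar G (S k)) (res_mods G (S k) m') i0)
                                   (perm_mod G (cons_sets (Delta_pow G (S k)) (res_sets G (S k) m') i0)) with
                     | 0 => bar_perm_iso G (S k)
                     | S i' => res_perm_iso G (S k) m' i'
                     end
  end.

Lemma fs_prod_l G (A B : GSet G) : finite_stabilisers G A -> finite_stabilisers G (prod_set A B).
Proof.
  intros H [a b]. destruct (H a) as [l Hl]. exists l. intros g E. apply Hl, (f_equal fst E).
Qed.

Lemma fs_prod_r G (A B : GSet G) : finite_stabilisers G B -> finite_stabilisers G (prod_set A B).
Proof.
  intros H [a b]. destruct (H b) as [l Hl]. exists l. intros g E. apply Hl, (f_equal snd E).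
Qed.

Lemma fs_sum G (A B : GSet G) : finite_stabilisers G A -> finite_stabilisers G B ->
  finite_stabilisers G (sum_set A B).
Proof.
  intros HA HB [a|b].
  - destruct (HA a) as [l Hl]. exists l. intros g E. apply Hl. simpl in E. injection E. auto.
  - destruct (HB b) as [l Hl]. exists l. intros g E. apply Hl. simpl in E. injection E. auto.
Qed.

Lemma fs_Delta_pow G j : finite_stabilisers G (Delta_pow G (S j)).
Proof. apply fs_prod_r, fs_Delta. Qed.

Lemma fs_free_set G k : finite_stabilisers G (free_set G k).
Proof. apply fs_prod_l, fs_Delta_pow. Qed.

Lemma fs_res_sets G : forall m k i, finite_stabilisers G (res_sets G k m i).
Proof.
  induction m; intros k [|i]; simpl.
  - apply fs_sum; [apply fs_Delta_pow|apply fs_free_set].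
  - apply fs_free_set.
  - apply fs_Delta_pow.
  - apply IHm.
Qed.

Section Transport.
Variables (G : Grp) (n : nat) (P Q : nat -> ZGmod G) (d : forall i, P (S i) -> P i)
  (eps : P 0 -> trivZ G) (phi : forall i, iso (P i) (Q i)).

Definition transported_d (i : nat) (y : Q (S i)) : Q i := isof (phi i) (d i (isog (phi (S i)) y)).
Definition transported_eps (y : Q 0) : trivZ G := eps (isog (phi 0) y).

Lemma in_ker_transported i y :
  in_ker G (trivZ G) Q transported_d transported_eps i y <->
  in_ker G (trivZ G) P d eps i (isog (phi i) y).
Proof.
  destruct i as [|i]; simpl; [tauto|]. unfold transported_d. split.
  - intros H. rewrite <- (isogf G _ _ (phi i) (d i _)), H. apply hom0, isog_hom.
  - intros H. rewrite H. apply hom0, isof_hom.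
Qed.

Lemma transport :
  exact_resolution G (trivZ G) n P d eps -> F_split G (trivZ G) n P d eps ->
  exact_resolution G (trivZ G) n Q transported_d transported_eps /\
  F_split G (trivZ G) n Q transported_d transported_eps.
Proof.
  intros [E1 [E2 [E3 [E4 [E5 [E6 E7]]]]]] FS.
  unfold transported_d, transported_eps.
  split; [split; [|split; [|split; [|split; [|split; [|split]]]]]|].
  - exact (is_hom_comp G _ (P 0) _ _ eps (isog_hom G _ _ (phi 0)) E1).
  - intros j Hj. exact (is_hom_comp G _ _ _ (isog (phi (S j))) (fun x => isof (phi j) (d j x))
      (isog_hom G _ _ _) (is_hom_comp G _ _ _ (d j) _ (E2 j Hj) (isof_hom G _ _ _))).
  - intros m. destruct (E3 m) as [x Hx]. exists (isof (phi 0) x). rewrite isogf. exact Hx.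
  - intros Hn y. rewrite isogf. apply E4, Hn.
  - intros j Hj y. rewrite isogf, E5 by exact Hj. apply hom0, isof_hom.
  - intros i Hi x Hx. apply in_ker_transported in Hx. destruct (E6 i Hi _ Hx) as [y Hy].
    exists (isof (phi (S i)) y). rewrite isogf, Hy, isofg. reflexivity.
  - intros x Hx. apply in_ker_transported, E7 in Hx.
    rewrite <- (isofg G _ _ (phi n) x), Hx. apply hom0, isof_hom.
  - intros i Hi H HH. destruct (FS i Hi H HH) as [r [Ra [Rg [Rk Rf]]]].
    exists (fun y => isof (phi i) (r (isog (phi i) y))).
    destruct (isof_hom G _ _ (phi i)) as [Fa Fg]. destruct (isog_hom G _ _ (phi i)) as [Ga Gg].
    split; [|split; [|split]].
    + intros x y. rewrite Ga, Ra, Fa. reflexivity.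
    + intros h x Hh. rewrite Gg, Rg, Fg by exact Hh. reflexivity.
    + intros x. apply in_ker_transported. rewrite isogf. apply Rk.
    + intros x Hx. apply in_ker_transported in Hx. rewrite Rf by exact Hx. apply isofg.
Qed.

End Transport.

(* A nonzero G-fixed vector of  N (x) Z[Delta]  forces G to be finite: its
   support contains the orbit of a point of Delta, and stabilisers are finite. *)
Lemma fixed_vector_finite G (N : ZGmod G) (f : tens G N (Delta G)) :
  f <> mzero -> (forall g, mact g f = f) -> exists lG : list G, forall g, In g lG.
Proof.
  intros Hf Ff.
  assert (Hw : exists w, tval f w <> mzero).
  { apply NNPP. intros Hn. apply Hf. apply tens_ext. intros w.
    destruct (classic (tval f w = mzero)) as [E|E]; [exact E|]. exfalso. apply Hn. exists w. exact E. }
  destruct Hw as [w Hw]. destruct (tens_cover G _ _ f) as [l [_ Hl]].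
  assert (Orb : forall g, In (sact g w) l).
  { intros g. apply Hl. rewrite <- (Ff g), tval_act, sactK. intros E.
    apply Hw, (mact_inj G _ g). rewrite E. symmetry. apply mact0. }
  destruct (Delta_stab_fin G w) as [_ [_ [_ [lS HS]]]].
  set (pick := fun u : Delta G => match excluded_middle_informative (exists g, sact g w = u) with
                                  | left e => proj1_sig (cid e) | right _ => gone end).
  exists (flat_map (fun u => map (gmul (pick u)) lS) l).
  intros g. apply in_flat_map. exists (sact g w). split; [apply Orb|].
  assert (Hp : sact (pick (sact g w)) w = sact g w).
  { unfold pick. destruct (excluded_middle_informative _) as [e|n].
    - exact (proj2_sig (cid e)).
    - exfalso. apply n. exists g. reflexivity. }
  set (h := pick (sact g w)) in *.
  rewrite <- (gKr G h g). apply in_map, HS. unfold stab. rewrite sactM, <- Hp, sactK. reflexivity.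
Qed.

(* A length-0 resolution identifies Z with an F-projective module, which
   then contains the nonzero fixed vector corresponding to 1. *)
Lemma F_resolution_0_finite G P d eps :
  F_resolution G 0 P d eps -> exists lG : list G, forall g, In g lG.
Proof.
  intros [[E1 [_ [E3 [_ [_ [_ E7]]]]]] [_ FP]].
  destruct (E3 1%Z) as [x0 Hx0].
  assert (Fix : forall g, mact g x0 = x0).
  { intros g. apply msub_eq0, E7. simpl. destruct E1 as [Ea Eg].
    rewrite (addB _ _ _ eps Ea), Eg. exact (msubxx G _ (eps x0)). }
  destruct (FP 0 (le_n _)) as [N [s [p [Hs [Hp Ps]]]]].
  apply (fixed_vector_finite G N (s x0)).
  - intros E. assert (x0 = mzero) as H0 by (rewrite <- (Ps x0), E; apply (hom0 _ _ _ _ Hp)).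
    rewrite H0, (hom0 _ _ _ _ E1) in Hx0. discriminate.
  - intros g. rewrite <- (proj2 Hs), Fix. reflexivity.
Qed.

(* For finite G,  0 -> Z[pt] -> Z -> 0  is the required resolution. *)
Lemma finite_group_resolution (G : Grp) : (exists lG : list G, forall g, In g lG) ->
  exists (Omega : nat -> GSet G)
         (d : forall i, perm_mod G (Omega (S i)) -> perm_mod G (Omega i))
         (eps : perm_mod G (Omega 0) -> trivZ G),
    (forall i, i <= 0 -> finite_stabilisers G (Omega i)) /\
    exact_resolution G (trivZ G) 0 (fun i => perm_mod G (Omega i)) d eps /\
    F_split G (trivZ G) 0 (fun i => perm_mod G (Omega i)) d eps.
Proof.
  intros [lG HlG].
  set (e := triv_perm_iso G).
  assert (Inj : forall x : perm_mod G (point_set G), isog e x = mzero -> x = mzero).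
  { intros x Hx. rewrite <- (isofg G _ _ e x), Hx. apply tens_ext; intros []; reflexivity. }
  exists (fun _ => point_set G), (fun _ _ => mzero), (isog e).
  split; [|split; [split; [|split; [|split; [|split; [|split; [|split]]]]]|]].
  - intros i _ w. exists lG. intros g _. apply HlG.
  - apply isog_hom.
  - intros j Hj. lia.
  - intros z. exists (isof e z). apply isogf.
  - intros Hn. lia.
  - intros j Hj. lia.
  - intros i Hi. lia.
  - exact Inj.
  - intros i Hi H HH. assert (i = 0) by lia. subst.
    exists (fun _ => mzero). split; [|split; [|split]].
    + intros x y. symmetry. apply madd0.
    + intros h x _. symmetry. apply mact0.
    + intros x. reflexivity.
    + intros x Hx. symmetry. apply Inj, Hx.
Qed.

(* Q_(m+1) is F-projective, so  B_(m+2) -> Q_(m+1)  splits; the resulting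
   resolution  res_mods G 0 m  of  Z = Q_0  consists of permutation modules. *)
Lemma positive_length_resolution G m P d eps : F_resolution G (S m) P d eps ->
  exists (Omega : nat -> GSet G)
         (d : forall i, perm_mod G (Omega (S i)) -> perm_mod G (Omega i))
         (eps : perm_mod G (Omega 0) -> trivZ G),
    (forall i, i <= S m -> finite_stabilisers G (Omega i)) /\
    exact_resolution G (trivZ G) (S m) (fun i => perm_mod G (Omega i)) d eps /\
    F_split G (trivZ G) (S m) (fun i => perm_mod G (Omega i)) d eps.
Proof.
  intros R.
  destruct (lifting G (bar_Q G (S m)) (bar G (S (S m))) (bar_Q G (S m)) (bar_dc G (S m))
    (fun q => q) (Fproj_bar_cycles G (S m) P d eps R) (bar_dc_hom G (S m))
    (bar_dc_F_surjective G (S m)) (is_hom_id G _)) as [s Hs].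
  destruct (res_resolves G m 0 (ex_intro _ s Hs)) as [E1 [E2 [_ [E4 [E5 [E6 [E7 [E8 E9]]]]]]]].
  assert (ER : exact_resolution G (trivZ G) (S m) (res_mods G 0 m) (res_diff G 0 m) (res_aug G 0 m)).
  { split; [exact E1|split; [exact E2|split; [|exact (conj E5 (conj E6 (conj E7 E8)))]]].
    intros z. apply E4. exact I. }
  destruct (transport G (S m) _ _ _ _ (res_perm_iso G 0 m) ER E9) as [T1 T2].
  exists (res_sets G 0 m), (transported_d G _ _ (res_diff G 0 m) (res_perm_iso G 0 m)),
    (transported_eps G _ _ (res_aug G 0 m) (res_perm_iso G 0 m)).
  split; [intros i _; apply fs_res_sets|split; [exact T1|exact T2]].
Qed.

Theorem mainTheorem2 (G : Grp) (n : nat) (Hcd : Fcd_eq G n) :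
  exists (Omega : nat -> GSet G)
         (d : forall i, perm_mod G (Omega (S i)) -> perm_mod G (Omega i))
         (eps : perm_mod G (Omega 0) -> trivZ G),
    (forall i, i <= n -> finite_stabilisers G (Omega i)) /\
    exact_resolution G (trivZ G) n (fun i => perm_mod G (Omega i)) d eps /\
    F_split G (trivZ G) n (fun i => perm_mod G (Omega i)) d eps.
Proof.
  destruct Hcd as [[P [d [eps [HR [HF HP]]]]] _].
  assert (R : F_resolution G n P d eps) by (split; auto).
  destruct n as [|m].
  - exact (finite_group_resolution G (F_resolution_0_finite G P d eps R)).
  - exact (positive_length_resolution G m P d eps R).
Qed.
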